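(* Let $\mathcal J$ be a dyadic integer and let $K=\sum_{s\ge\mathcal J,\,s\text{ dyadic}}K_s$ and $L=\sum_{s\ge\mathcal J,\,s\text{ dyadic}}L_s$ be CZ kernels, where each $K_s$, $L_s$ is a CZ building block of scale $s$. Then $K*L$ is also a CZ kernel which is a dyadic sum of CZ building blocks of scales $\ge\mathcal J$, and $$\|K*L\|_{CZ}\le C\|K\|_{CZ}\|L\|_{CZ},$$ with a constant $C$ independent of $\mathcal J$.
   Context: Dyadic integers are powers of $2$. Fix a universal $\omega>0$. For dyadic $s$, a kernel $K:\mathbb Z\to\mathbb C$ is a CZ building block of scale $s$ with constant $D>0$ if (i) $\sum_xK(x)=0$; (ii) $\operatorname{supp}K\subset[-s,s]$; (iii) $\sum_x|K(x)|^2\le D^2/s$; (iv) $\sum_x|K(x+h)-K(x)|^2\le \frac{D^2}{s}(\frac{|h|}{s})^\omega$ for all $h\in\mathbb Z$. A CZ kernel is $K=\sum_{s\text{ dyadic}}K_s$ with each $K_s$ a CZ building block of scale $s$; $\|K\|_{CZ}$ is the infimum over such representations of the supremum of the constants $D$ of the blocks. Convolution is on $\mathbb Z$. *)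

From Stdlib Require Import Reals ZArith Lra.
From Coquelicot Require Import Coquelicot.
Open Scope R_scope.

(* finite sum over the integer range [a, b] (used with a <= b) *)
Definition zsumC (a b : Z) (f : Z -> C) : C :=
  sum_n (fun n => f (a + Z.of_nat n)%Z) (Z.to_nat (b - a)).
Definition zsumR (a b : Z) (f : Z -> R) : R :=
  sum_n (fun n => f (a + Z.of_nat n)%Z) (Z.to_nat (b - a)).

Definition dy (k : nat) : Z := (2 ^ Z.of_nat k)%Z.

(* a^w for a >= 0, w > 0, with 0^w = 0 *)
Definition rpow (a w : R) : R := if Rle_dec a 0 then 0 else Rpower a w.

(* K is a CZ building block of scale s = 2^k with constant D.
   Since supp K ⊂ [-s,s], the sums over Z in (i),(iii) are the sums over
   [-s,s], and the sum in (iv) is the sum over [-s-|h|, s+|h|]. *)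
Definition CZblock (w : R) (K : Z -> C) (k : nat) (D : R) : Prop :=
  let s := dy k in
  zsumC (- s) s K = 0%C /\
  (forall x : Z, (Z.abs x > s)%Z -> K x = 0%C) /\
  zsumR (- s) s (fun x => (Cmod (K x)) ^ 2) <= D ^ 2 / IZR s /\
  (forall h : Z,
     zsumR (- s - Z.abs h) (s + Z.abs h)
       (fun x => (Cmod (Cminus (K (x + h)%Z) (K x))) ^ 2)
     <= D ^ 2 / IZR s * rpow (IZR (Z.abs h) / IZR s) w).

(* Kb is a representation K = sum_{s dyadic, s >= 2^j} K_s, with every
   block K_s (s = 2^k) a CZ building block of constant D, and K_s = 0
   for s < 2^j; the sum converges pointwise. *)
Definition CZrep (w : R) (j : nat) (Kb : nat -> Z -> C) (D : R) (K : Z -> C) : Prop :=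
  (forall k : nat, CZblock w (Kb k) k D) /\
  (forall k : nat, (k < j)%nat -> forall x : Z, Kb k x = 0%C) /\
  (forall x : Z, is_series (fun k => Kb k x) (K x)).

Definition CZnorm (w : R) (K : Z -> C) : Rbar :=
  Glb_Rbar (fun D => 0 < D /\ exists Kb, CZrep w 0 Kb D K).

Definition is_zsum (f : Z -> C) (l : C) : Prop :=
  exists l1 l2 : C,
    is_series (fun n : nat => f (Z.of_nat n)) l1 /\
    is_series (fun n : nat => f (- (Z.of_nat n + 1))%Z) l2 /\
    l = Cplus l1 l2.

Definition is_conv (K L M : Z -> C) : Prop :=
  forall x : Z, is_zsum (fun y => Cmult (K y) (L (x - y)%Z)) (M x).

From Stdlib Require Import Reals ZArith.
From Coquelicot Require Import Coquelicot.
From Stdlib Require Import Lra Lia ClassicalEpsilon FunctionalExtensionality.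
Open Scope R_scope.

(* With [K_i], [L_i] the blocks of scale [2^i], the block of [K * L] at scale [2^(k+1)] is
   [(K_0 + ... + K_k) * L_k + (L_0 + ... + L_(k-1)) * K_k].  The blocks of scale at most [2^n]
   then add up to [(K_0 + ... + K_(n-1)) * (L_0 + ... + L_(n-1))], which converges to [K * L]
   because [||K_i||_2 <= D 2^(-i/2)].
   For the l^2 and smoothness bounds, the partial sums [K_0 + ... + K_n] are Fourier multipliers
   bounded uniformly in [n]: mean zero gives [|K_i^(xi)| <= C D 2^i |xi|] and smoothness gives
   [|K_i^(xi)| <= C D (2^i |xi|)^(-w/2)], which sum over [i].  Plancherel for the discrete
   Fourier transform on a window large enough to avoid aliasing turns this into an l^2 operator
   bound. *)

Fixpoint wsumR (a : Z) (n : nat) (f : Z -> R) : R :=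
  match n with O => 0 | S n' => f a + wsumR (a + 1)%Z n' f end.
Fixpoint wsumC (a : Z) (n : nat) (f : Z -> C) : C :=
  match n with O => 0%C | S n' => Cplus (f a) (wsumC (a + 1)%Z n' f) end.

Lemma wsumR_ext a n f g : (forall x, (a <= x < a + Z.of_nat n)%Z -> f x = g x) ->
  wsumR a n f = wsumR a n g.
Proof.
  revert a; induction n as [|n IH]; intros a H; simpl; auto.
  rewrite H by lia. rewrite (IH (a + 1)%Z); auto. intros; apply H; lia.
Qed.
Lemma wsumC_ext a n (f g : Z -> C) : (forall x, (a <= x < a + Z.of_nat n)%Z -> f x = g x) ->
  wsumC a n f = wsumC a n g.
Proof.
  revert a; induction n as [|n IH]; intros a H; simpl; auto.
  rewrite H by lia. rewrite (IH (a + 1)%Z); auto. intros; apply H; lia.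
Qed.

Lemma wsumR_split a n m f : wsumR a (n + m) f = wsumR a n f + wsumR (a + Z.of_nat n) m f.
Proof.
  revert a; induction n as [|n IH]; intros a; simpl.
  - replace (a + 0)%Z with a by lia. ring.
  - rewrite IH. replace (a + 1 + Z.of_nat n)%Z with (a + Z.pos (Pos.of_succ_nat n))%Z by lia. ring.
Qed.
Lemma wsumC_split a n m (f : Z -> C) :
  wsumC a (n + m) f = Cplus (wsumC a n f) (wsumC (a + Z.of_nat n) m f).
Proof.
  revert a; induction n as [|n IH]; intros a; simpl.
  - replace (a + 0)%Z with a by lia. ring.
  - rewrite IH. replace (a + 1 + Z.of_nat n)%Z with (a + Z.pos (Pos.of_succ_nat n))%Z by lia. ring.
Qed.

Lemma wsumR_eq0 a n f : (forall x, (a <= x < a + Z.of_nat n)%Z -> f x = 0) -> wsumR a n f = 0.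
Proof.
  revert a; induction n as [|n IH]; intros a H; simpl; auto.
  rewrite H by lia. rewrite IH; [ring|]. intros; apply H; lia.
Qed.
Lemma wsumC_eq0 a n (f : Z -> C) :
  (forall x, (a <= x < a + Z.of_nat n)%Z -> f x = 0%C) -> wsumC a n f = 0%C.
Proof.
  revert a; induction n as [|n IH]; intros a H; simpl; auto.
  rewrite H by lia. rewrite IH; [ring|]. intros; apply H; lia.
Qed.

Lemma wsumR_plus a n f g : wsumR a n (fun x => f x + g x) = wsumR a n f + wsumR a n g.
Proof. revert a; induction n as [|n IH]; intros; simpl; [ring|]. rewrite IH; ring. Qed.
Lemma wsumC_plus a n (f g : Z -> C) :
  wsumC a n (fun x => Cplus (f x) (g x)) = Cplus (wsumC a n f) (wsumC a n g).
Proof. revert a; induction n as [|n IH]; intros; simpl; [ring|]. rewrite IH; ring. Qed.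
Lemma wsumC_minus a n (f g : Z -> C) :
  wsumC a n (fun x => Cminus (f x) (g x)) = Cminus (wsumC a n f) (wsumC a n g).
Proof. revert a; induction n as [|n IH]; intros; simpl; [ring|]. rewrite IH; ring. Qed.
Lemma wsumR_scal a n c f : wsumR a n (fun x => c * f x) = c * wsumR a n f.
Proof. revert a; induction n as [|n IH]; intros; simpl; [ring|]. rewrite IH; ring. Qed.
Lemma wsumC_scal a n (c : C) (f : Z -> C) :
  wsumC a n (fun x => Cmult c (f x)) = Cmult c (wsumC a n f).
Proof. revert a; induction n as [|n IH]; intros; simpl; [ring|]. rewrite IH; ring. Qed.
Lemma wsumC_scalr a n (c : C) (f : Z -> C) :
  wsumC a n (fun x => Cmult (f x) c) = Cmult (wsumC a n f) c.
Proof. revert a; induction n as [|n IH]; intros; simpl; [ring|]. rewrite IH; ring. Qed.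

Lemma wsumR_le a n f g : (forall x, (a <= x < a + Z.of_nat n)%Z -> f x <= g x) ->
  wsumR a n f <= wsumR a n g.
Proof.
  revert a; induction n as [|n IH]; intros a H; simpl; [lra|].
  apply Rplus_le_compat; [apply H; lia | apply IH; intros; apply H; lia].
Qed.
Lemma wsumR_ge0 a n f : (forall x, (a <= x < a + Z.of_nat n)%Z -> 0 <= f x) -> 0 <= wsumR a n f.
Proof. intros H. rewrite <- (wsumR_eq0 a n (fun _ => 0)) by auto. apply wsumR_le; auto. Qed.
Lemma Cmod_wsumC_le a n (f : Z -> C) : Cmod (wsumC a n f) <= wsumR a n (fun x => Cmod (f x)).
Proof.
  revert a; induction n as [|n IH]; intros; simpl. { rewrite Cmod_0; lra. }
  eapply Rle_trans; [apply Cmod_triangle|]. specialize (IH (a + 1)%Z); lra.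
Qed.

Lemma wsumR_shift a n h f : wsumR a n (fun x => f (x + h)%Z) = wsumR (a + h) n f.
Proof.
  revert a; induction n as [|n IH]; intros; simpl; auto.
  rewrite IH. replace (a + 1 + h)%Z with (a + h + 1)%Z by lia. auto.
Qed.
Lemma wsumC_shift a n h (f : Z -> C) : wsumC a n (fun x => f (x + h)%Z) = wsumC (a + h) n f.
Proof.
  revert a; induction n as [|n IH]; intros; simpl; auto.
  rewrite IH. replace (a + 1 + h)%Z with (a + h + 1)%Z by lia. auto.
Qed.

Lemma wsumR_reflect a n F : wsumR a n (fun y => F (- y)%Z) = wsumR (- (a + Z.of_nat n - 1)) n F.
Proof.
  revert a; induction n as [|n IH]; intros; [simpl; auto|].
  replace (S n) with (n + 1)%nat by lia. rewrite wsumR_split, IH.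
  replace (n + 1)%nat with (1 + n)%nat by lia. rewrite wsumR_split. simpl.
  replace (- (a + Z.pos (Pos.of_succ_nat n) - 1) + 1)%Z with (- (a + Z.of_nat n - 1))%Z by lia.
  replace (- (a + Z.of_nat n))%Z with (- (a + Z.pos (Pos.of_succ_nat n) - 1))%Z by lia. ring.
Qed.
Lemma wsumC_reflect a n F : wsumC a n (fun y => F (- y)%Z) = wsumC (- (a + Z.of_nat n - 1)) n F.
Proof.
  revert a; induction n as [|n IH]; intros; [simpl; auto|].
  replace (S n) with (n + 1)%nat by lia. rewrite wsumC_split, IH.
  replace (n + 1)%nat with (1 + n)%nat by lia. rewrite wsumC_split. simpl.
  replace (- (a + Z.pos (Pos.of_succ_nat n) - 1) + 1)%Z with (- (a + Z.of_nat n - 1))%Z by lia.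
  replace (- (a + Z.of_nat n))%Z with (- (a + Z.pos (Pos.of_succ_nat n) - 1))%Z by lia. ring.
Qed.

Lemma wsumC_fubini a n b m (F : Z -> Z -> C) :
  wsumC a n (fun x => wsumC b m (F x)) = wsumC b m (fun y => wsumC a n (fun x => F x y)).
Proof.
  revert a; induction n as [|n IH]; intros; simpl.
  - symmetry; apply wsumC_eq0; auto.
  - rewrite IH, <- wsumC_plus. auto.
Qed.

Lemma wsumR_window a n a' n' f :
  (a' <= a)%Z -> (a + Z.of_nat n <= a' + Z.of_nat n')%Z ->
  (forall x, (x < a \/ a + Z.of_nat n <= x)%Z -> f x = 0) ->
  wsumR a' n' f = wsumR a n f.
Proof.
  intros H1 H2 H3.
  set (p := Z.to_nat (a - a')). set (q := (n' - p - n)%nat).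
  replace n' with (p + (n + q))%nat by (unfold q, p; lia).
  rewrite !wsumR_split, (wsumR_eq0 a' p), (wsumR_eq0 _ q) by (intros; apply H3; lia).
  replace (a' + Z.of_nat p)%Z with a by (unfold p; lia). ring.
Qed.
Lemma wsumC_window a n a' n' (f : Z -> C) :
  (a' <= a)%Z -> (a + Z.of_nat n <= a' + Z.of_nat n')%Z ->
  (forall x, (x < a \/ a + Z.of_nat n <= x)%Z -> f x = 0%C) ->
  wsumC a' n' f = wsumC a n f.
Proof.
  intros H1 H2 H3.
  set (p := Z.to_nat (a - a')). set (q := (n' - p - n)%nat).
  replace n' with (p + (n + q))%nat by (unfold q, p; lia).
  rewrite !wsumC_split, (wsumC_eq0 a' p), (wsumC_eq0 _ q) by (intros; apply H3; lia).
  replace (a' + Z.of_nat p)%Z with a by (unfold p; lia). ring.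
Qed.

Lemma zsumR_wsumR a b f : zsumR a b f = wsumR a (S (Z.to_nat (b - a))) f.
Proof.
  unfold zsumR. induction (Z.to_nat (b - a)) as [|N IH].
  - rewrite sum_O. simpl. replace (a + 0)%Z with a by lia. ring.
  - rewrite sum_Sn, IH. replace (S (S N)) with (S N + 1)%nat by lia.
    rewrite wsumR_split. simpl. change plus with Rplus.
    replace (a + Z.pos (Pos.of_succ_nat N))%Z with (a + Z.of_nat (S N))%Z by lia. ring.
Qed.
Lemma zsumC_wsumC a b (f : Z -> C) : zsumC a b f = wsumC a (S (Z.to_nat (b - a))) f.
Proof.
  unfold zsumC. induction (Z.to_nat (b - a)) as [|N IH].
  - rewrite sum_O. simpl. replace (a + 0)%Z with a by lia. ring.
  - rewrite sum_Sn, IH. replace (S (S N)) with (S N + 1)%nat by lia.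
    rewrite wsumC_split. simpl. change plus with Cplus.
    replace (a + Z.pos (Pos.of_succ_nat N))%Z with (a + Z.of_nat (S N))%Z by lia. ring.
Qed.

Definition l2sq a n (f : Z -> C) : R := wsumR a n (fun x => Cmod (f x) ^ 2).

Lemma l2sq_ge0 a n f : 0 <= l2sq a n f.
Proof. apply wsumR_ge0; intros; apply pow2_ge_0. Qed.

Lemma l2sq_ext a n (f g : Z -> C) : (forall x, f x = g x) -> l2sq a n f = l2sq a n g.
Proof. intros H. apply wsumR_ext. intros. rewrite H. auto. Qed.

Lemma wsumR_Cauchy_Schwarz a n (u v : Z -> R) :
  (wsumR a n (fun x => u x * v x)) ^ 2 <=
  wsumR a n (fun x => u x ^ 2) * wsumR a n (fun x => v x ^ 2).
Proof.
  set (A := wsumR a n (fun x => u x ^ 2)). set (B := wsumR a n (fun x => u x * v x)).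
  set (Cv := wsumR a n (fun x => v x ^ 2)).
  assert (discr : forall t, 0 <= t ^ 2 * A - 2 * t * B + Cv).
  { intros t.
    replace (t ^ 2 * A - 2 * t * B + Cv) with (wsumR a n (fun x => (t * u x - v x) ^ 2)).
    - apply wsumR_ge0; intros; apply pow2_ge_0.
    - rewrite (wsumR_ext _ _ _ (fun x => t ^ 2 * u x ^ 2 + ((-2 * t) * (u x * v x) + v x ^ 2)))
        by (intros; ring).
      rewrite !wsumR_plus, !wsumR_scal. unfold A, B, Cv; ring. }
  assert (HA : 0 <= A) by (apply wsumR_ge0; intros; apply pow2_ge_0).
  destruct (Req_dec A 0) as [A0|A0].
  - destruct (Req_dec B 0) as [B0|B0]; [rewrite B0, A0; lra|].
    specialize (discr ((Cv + 1) / (2 * B))). rewrite A0 in discr.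
    replace (((Cv + 1) / (2 * B)) ^ 2 * 0 - 2 * ((Cv + 1) / (2 * B)) * B + Cv) with (-1) in discr
      by (field; auto). lra.
  - specialize (discr (B / A)).
    replace ((B / A) ^ 2 * A - 2 * (B / A) * B + Cv) with ((A * Cv - B ^ 2) / A) in discr
      by (field; auto).
    assert (0 <= A * Cv - B ^ 2); [|lra].
    replace (A * Cv - B ^ 2) with (A * ((A * Cv - B ^ 2) / A)) by (field; auto).
    apply Rmult_le_pos; lra.
Qed.

Lemma wsumR_Cmod_mult_le a n (f g : Z -> C) :
  wsumR a n (fun x => Cmod (f x) * Cmod (g x)) <= sqrt (l2sq a n f) * sqrt (l2sq a n g).
Proof.
  rewrite <- sqrt_mult by apply l2sq_ge0.
  apply Rsqr_incr_0_var; [|apply sqrt_pos].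
  rewrite Rsqr_sqrt by (apply Rmult_le_pos; apply l2sq_ge0).
  rewrite Rsqr_pow2. apply wsumR_Cauchy_Schwarz.
Qed.

Lemma Cmod_wsumC_mult_le a n (f g : Z -> C) :
  Cmod (wsumC a n (fun x => Cmult (f x) (g x))) <= sqrt (l2sq a n f) * sqrt (l2sq a n g).
Proof.
  eapply Rle_trans; [apply Cmod_wsumC_le|]. eapply Rle_trans; [|apply wsumR_Cmod_mult_le].
  right. apply wsumR_ext. intros. apply Cmod_mult.
Qed.

Lemma l1_le_l2 a n (f : Z -> C) :
  wsumR a n (fun x => Cmod (f x)) <= sqrt (INR n) * sqrt (l2sq a n f).
Proof.
  replace (INR n) with (l2sq a n (fun _ => RtoC 1)).
  - eapply Rle_trans; [|apply wsumR_Cmod_mult_le].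
    right. apply wsumR_ext. intros. rewrite Cmod_1. ring.
  - unfold l2sq. rewrite Cmod_1. clear. revert a.
    induction n as [|n IH]; intros; simpl; [auto|]. rewrite IH. destruct n; simpl; ring.
Qed.

Lemma l2_triangle a n (f g : Z -> C) :
  sqrt (l2sq a n (fun x => Cplus (f x) (g x))) <= sqrt (l2sq a n f) + sqrt (l2sq a n g).
Proof.
  rewrite <- (sqrt_Rsqr (sqrt (l2sq a n f) + sqrt (l2sq a n g)))
    by (apply Rplus_le_le_0_compat; apply sqrt_pos).
  apply sqrt_le_1_alt. unfold Rsqr.
  replace ((sqrt (l2sq a n f) + sqrt (l2sq a n g)) * (sqrt (l2sq a n f) + sqrt (l2sq a n g)))
    with (l2sq a n f + 2 * (sqrt (l2sq a n f) * sqrt (l2sq a n g)) + l2sq a n g)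
    by (ring_simplify; rewrite !pow2_sqrt by apply l2sq_ge0; ring).
  assert (CS := wsumR_Cmod_mult_le a n f g).
  apply Rle_trans with
    (l2sq a n f + 2 * wsumR a n (fun x => Cmod (f x) * Cmod (g x)) + l2sq a n g); [|lra].
  unfold l2sq. rewrite <- wsumR_scal, <- !wsumR_plus. apply wsumR_le; intros.
  assert (T := Cmod_triangle (f x) (g x)). assert (T1 := Cmod_ge_0 (Cplus (f x) (g x))).
  assert (T2 := Cmod_ge_0 (f x)). assert (T3 := Cmod_ge_0 (g x)). nra.
Qed.

Lemma l2sq_plus_le a n (f g : Z -> C) :
  l2sq a n (fun x => Cplus (f x) (g x)) <= 2 * l2sq a n f + 2 * l2sq a n g.
Proof.
  unfold l2sq. rewrite <- !wsumR_scal, <- wsumR_plus. apply wsumR_le; intros.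
  assert (T := Cmod_triangle (f x) (g x)). assert (T1 := Cmod_ge_0 (Cplus (f x) (g x))).
  assert (T2 := Cmod_ge_0 (f x)). assert (T3 := Cmod_ge_0 (g x)).
  assert (Cmod (Cplus (f x) (g x)) ^ 2 <= (Cmod (f x) + Cmod (g x)) ^ 2)
    by (apply pow_incr; split; auto).
  assert (0 <= (Cmod (f x) - Cmod (g x)) ^ 2) by apply pow2_ge_0.
  simpl in *. lra.
Qed.

Lemma l2sq_window a n a' n' (f : Z -> C) :
  (a' <= a)%Z -> (a + Z.of_nat n <= a' + Z.of_nat n')%Z ->
  (forall x, (x < a \/ a + Z.of_nat n <= x)%Z -> f x = 0%C) ->
  l2sq a' n' f = l2sq a n f.
Proof.
  intros H1 H2 H3. apply wsumR_window; auto.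
  intros x Hx. rewrite H3 by auto. rewrite Cmod_0. ring.
Qed.

Lemma l2sq_reflect a n f x :
  l2sq a n (fun y => f (x - y)%Z) = l2sq (- (a + Z.of_nat n - 1) + x) n f.
Proof.
  unfold l2sq. rewrite (wsumR_ext _ _ _ (fun y => (fun u => Cmod (f (u + x)%Z) ^ 2) (- y)%Z)).
  - rewrite (wsumR_reflect _ _ (fun u => Cmod (f (u + x)%Z) ^ 2)).
    apply (wsumR_shift _ _ x (fun z => Cmod (f z) ^ 2)).
  - intros y _. replace (- y + x)%Z with (x - y)%Z by lia. auto.
Qed.

Lemma l2sq_limit a n (u : nat -> Z -> C) (v : Z -> C) B :
  (forall y, filterlim (fun N => u N y) eventually (locally (v y))) ->
  (forall N, l2sq a n (u N) <= B) -> l2sq a n v <= B.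
Proof.
  intros Hlim HB.
  assert (Hl2 : forall a, is_lim_seq (fun N => l2sq a n (u N)) (l2sq a n v)).
  { clear HB. induction n as [|n IH]; intros a0; unfold l2sq; simpl.
    - apply is_lim_seq_const.
    - apply is_lim_seq_plus'; [|apply IH].
      assert (Hmod : is_lim_seq (fun N => Cmod (u N a0)) (Cmod (v a0)))
        by exact (filterlim_comp _ _ _ _ norm _ _ _ (Hlim a0) (filterlim_norm (v a0))).
      exact (is_lim_seq_mult' _ _ _ _ Hmod (is_lim_seq_mult' _ _ _ _ Hmod (is_lim_seq_const 1))). }
  exact (is_lim_seq_le _ _ _ _ HB (Hl2 a) (is_lim_seq_const B)).
Qed.

(** * The discrete Fourier transform *)

Definition expi (t : R) : C := (cos t, sin t).

Lemma expi_add a b : expi (a + b) = Cmult (expi a) (expi b).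
Proof.
  unfold expi, Cmult; simpl. rewrite cos_plus, sin_plus.
  apply injective_projections; simpl; ring.
Qed.
Lemma expi_0 : expi 0 = RtoC 1.
Proof. unfold expi. rewrite cos_0, sin_0. auto. Qed.
Lemma Cmod_expi t : Cmod (expi t) = 1.
Proof.
  unfold Cmod, expi; cbn [fst snd]. rewrite <- sqrt_1. f_equal.
  assert (H := sin2_cos2 t). unfold Rsqr in H. rewrite <- H. ring.
Qed.
Lemma expi_conj t : Cconj (expi t) = expi (- t).
Proof. unfold expi, Cconj; simpl. rewrite cos_neg, sin_neg. auto. Qed.
Lemma expi_2PI_int m : expi (2 * PI * IZR m) = RtoC 1.
Proof.
  unfold expi. apply injective_projections; simpl.
  - replace (2 * PI * IZR m) with (2 * (IZR m * PI)) by ring.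
    rewrite cos_2a_sin, sin_eq_0_1 by (exists m; auto). ring.
  - apply sin_eq_0_1. exists (2 * m)%Z. rewrite mult_IZR. ring.
Qed.

Lemma Rabs_sin_le x : Rabs (sin x) <= Rabs x.
Proof.
  assert (pos : forall x, 0 <= x -> Rabs (sin x) <= x).
  { clear x. intros x Hx. destruct (Req_dec x 0) as [->|H0]. { rewrite sin_0, Rabs_R0; lra. }
    assert (H1 := sin_lt_x x ltac:(lra)). assert (H3 := SIN_bound x).
    assert (PI > 3) by (assert (H4 := PI2_3_2); lra).
    destruct (Rle_dec x PI).
    - assert (0 <= sin x) by (apply sin_ge_0; lra). rewrite Rabs_right; lra.
    - unfold Rabs; destruct (Rcase_abs (sin x)); lra. }
  destruct (Rle_dec 0 x).
  - rewrite (Rabs_right x) by lra. auto.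
  - replace x with (- (- x)) by ring. rewrite sin_neg, !Rabs_Ropp, (Rabs_left x) by lra.
    apply pos; lra.
Qed.

Lemma Cmod_expi_sub1_sq t : Cmod (Cminus (expi t) (RtoC 1)) ^ 2 = 2 - 2 * cos t.
Proof.
  unfold Cmod. rewrite pow2_sqrt by (apply Rplus_le_le_0_compat; apply pow2_ge_0).
  unfold expi, Cminus, Cplus, Copp, RtoC; cbn [fst snd].
  assert (H := sin2_cos2 t). unfold Rsqr in H. nra.
Qed.
Lemma Cmod_expi_sub1_sin t : Cmod (Cminus (expi t) (RtoC 1)) ^ 2 = 4 * sin (t / 2) ^ 2.
Proof.
  rewrite Cmod_expi_sub1_sq. replace t with (2 * (t / 2)) at 1 by field.
  rewrite cos_2a_sin. ring.
Qed.
Lemma Cmod_expi_sub1_le t : Cmod (Cminus (expi t) (RtoC 1)) <= Rabs t.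
Proof.
  assert (H := Cmod_expi_sub1_sin t). assert (H1 := Rabs_sin_le (t / 2)).
  assert (sin (t / 2) ^ 2 <= (t / 2) ^ 2).
  { rewrite <- (pow2_abs (sin _)), <- (pow2_abs (t / 2)).
    apply pow_incr; split; auto. apply Rabs_pos. }
  assert (H3 := Cmod_ge_0 (Cminus (expi t) (RtoC 1))). assert (H4 := Rabs_pos t).
  assert (Cmod (Cminus (expi t) (RtoC 1)) ^ 2 <= Rabs t ^ 2) by (rewrite pow2_abs; nra).
  nra.
Qed.

Lemma wsumC_const a n (c : C) : wsumC a n (fun _ => c) = Cmult c (RtoC (INR n)).
Proof.
  revert a; induction n as [|n IH]; intros; simpl.
  - apply injective_projections; simpl; ring.
  - rewrite IH. apply injective_projections; simpl; destruct n; simpl; ring.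
Qed.

Lemma expi_geometric th a n :
  Cmult (Cminus (expi th) (RtoC 1)) (wsumC a n (fun k => expi (IZR k * th))) =
  Cminus (expi (IZR (a + Z.of_nat n) * th)) (expi (IZR a * th)).
Proof.
  revert a; induction n as [|n IH]; intros; simpl.
  - replace (a + 0)%Z with a by lia. ring.
  - rewrite Cmult_plus_distr_l, IH.
    replace (a + 1 + Z.of_nat n)%Z with (a + Z.pos (Pos.of_succ_nat n))%Z by lia.
    rewrite (plus_IZR a 1). replace ((IZR a + IZR 1) * th) with (IZR a * th + th) by (simpl; ring).
    rewrite expi_add. ring.
Qed.

Lemma wsumC_expi_orthogonal (n : nat) (m : Z) a : (0 < Z.abs m < Z.of_nat n)%Z ->
  wsumC a n (fun k => expi (IZR k * (2 * PI * IZR m / INR n))) = RtoC 0.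
Proof.
  intros Hm. set (th := 2 * PI * IZR m / INR n).
  assert (Hn : 0 < INR n) by (apply lt_0_INR; lia).
  assert (Hth : Cminus (expi th) (RtoC 1) <> RtoC 0).
  { intros E. assert (E2 := Cmod_expi_sub1_sin th). rewrite E, Cmod_0 in E2.
    assert (Hsin : sin (th / 2) = 0) by nra.
    apply sin_eq_0_0 in Hsin. destruct Hsin as [k Hk]. unfold th in Hk.
    assert (Hk2 : IZR m = IZR k * INR n).
    { apply Rmult_eq_reg_l with PI; [|apply PI_neq0].
      replace (PI * IZR m) with (2 * PI * IZR m / INR n / 2 * INR n) by (field; lra).
      rewrite Hk. ring. }
    rewrite INR_IZR_INZ, <- mult_IZR in Hk2. apply eq_IZR in Hk2.
    destruct (Z.eq_dec k 0); [subst; lia | nia]. }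
  assert (G := expi_geometric th a n).
  rewrite plus_IZR, Rmult_plus_distr_r, expi_add in G.
  replace (IZR (Z.of_nat n) * th) with (2 * PI * IZR m)
    in G by (unfold th; rewrite <- INR_IZR_INZ; field; lra).
  rewrite expi_2PI_int in G.
  replace (Cminus (Cmult (expi (IZR a * th)) (RtoC 1)) (expi (IZR a * th))) with (RtoC 0) in G
    by ring.
  replace (wsumC a n (fun k => expi (IZR k * th))) with
    (Cmult (Cinv (Cminus (expi th) (RtoC 1)))
       (Cmult (Cminus (expi th) (RtoC 1)) (wsumC a n (fun k => expi (IZR k * th)))))
    by (field; auto).
  rewrite G. ring.
Qed.

Definition fourier a n (f : Z -> C) (xi : R) : C :=
  wsumC a n (fun x => Cmult (f x) (expi (- (IZR x * xi)))).

Lemma wsumC_conj a n (f : Z -> C) : Cconj (wsumC a n f) = wsumC a n (fun x => Cconj (f x)).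
Proof.
  revert a; induction n as [|n IH]; intros; simpl.
  - apply injective_projections; simpl; ring.
  - rewrite Cplus_conj, IH. auto.
Qed.

Lemma RtoC_wsumR a n f : RtoC (wsumR a n f) = wsumC a n (fun x => RtoC (f x)).
Proof.
  revert a; induction n as [|n IH]; intros; simpl; auto.
  rewrite <- IH. apply injective_projections; simpl; ring.
Qed.

Lemma wsumC_dirac a n x (g : Z -> C) : (a <= x < a + Z.of_nat n)%Z ->
  wsumC a n (fun y => if Z.eq_dec x y then g y else 0%C) = g x.
Proof.
  revert a; induction n as [|n IH]; intros a H; simpl; [lia|].
  destruct (Z.eq_dec x a) as [<-|].
  - rewrite wsumC_eq0; [ring|]. intros y Hy. destruct (Z.eq_dec x y); [lia|auto].
  - rewrite IH by lia. ring.
Qed.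

Lemma wsumC_expi_freq (n : nat) a x y : (0 < n)%nat ->
  (a <= x < a + Z.of_nat n)%Z -> (a <= y < a + Z.of_nat n)%Z ->
  wsumC a n (fun k => expi (IZR k * (2 * PI * IZR (y - x) / INR n))) =
  if Z.eq_dec x y then RtoC (INR n) else 0%C.
Proof.
  intros Hn Hx Hy. assert (0 < INR n) by (apply lt_0_INR; lia).
  destruct (Z.eq_dec x y) as [<-|].
  - rewrite (wsumC_ext _ _ _ (fun _ => RtoC 1)), wsumC_const; [ring|].
    intros k _. rewrite <- expi_0. f_equal. replace (x - x)%Z with 0%Z by lia. simpl. field. lra.
  - apply wsumC_expi_orthogonal. lia.
Qed.

Lemma plancherel a n f : (0 < n)%nat ->
  wsumR a n (fun k => Cmod (fourier a n f (2 * PI * IZR k / INR n)) ^ 2) = INR n * l2sq a n f.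
Proof.
  intros Hn. assert (0 < INR n) by (apply lt_0_INR; lia).
  apply (f_equal fst) with (x := RtoC _) (y := RtoC _). rewrite RtoC_wsumR.
  rewrite (wsumC_ext _ _ _ (fun k => wsumC a n (fun x => wsumC a n (fun y =>
      Cmult (Cmult (f x) (Cconj (f y))) (expi (IZR k * (2 * PI * IZR (y - x) / INR n))))))).
  2:{ intros k _. rewrite Cmod2_conj. unfold fourier. rewrite wsumC_conj, <- wsumC_scalr.
      apply wsumC_ext; intros x _. rewrite <- wsumC_scal.
      apply wsumC_ext; intros y _. rewrite Cmult_conj, expi_conj.
      set (xi := 2 * PI * IZR k / INR n).
      replace (Cmult (Cmult (f x) (expi (- (IZR x * xi))))
                     (Cmult (Cconj (f y)) (expi (- - (IZR y * xi)))))
        with (Cmult (Cmult (f x) (Cconj (f y)))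
                    (Cmult (expi (- (IZR x * xi))) (expi (- - (IZR y * xi))))) by ring.
      rewrite <- expi_add, minus_IZR. do 2 f_equal. unfold xi. field. lra. }
  rewrite wsumC_fubini.
  rewrite (wsumC_ext _ _ _ (fun x => Cmult (Cmult (f x) (Cconj (f x))) (RtoC (INR n)))).
  2:{ intros x Hx. rewrite wsumC_fubini.
      rewrite (wsumC_ext _ _ _ (fun y => if Z.eq_dec x y
                                 then Cmult (Cmult (f x) (Cconj (f y))) (RtoC (INR n)) else 0%C)).
      - apply wsumC_dirac; auto.
      - intros y Hy. rewrite wsumC_scal, wsumC_expi_freq by auto.
        destruct (Z.eq_dec x y); [subst|]; ring. }
  unfold l2sq. rewrite RtoC_mult, RtoC_wsumR, <- wsumC_scal. apply wsumC_ext; intros.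
  rewrite Cmod2_conj. ring.
Qed.

(** * Convolution of finitely supported functions *)

Notation ball_sum R f := (wsumC (- Z.of_nat R) (2 * R + 1) f).
Notation ball_l2 R f := (l2sq (- Z.of_nat R) (2 * R + 1) f).
Notation ball_fourier R f := (fourier (- Z.of_nat R) (2 * R + 1) f).

Definition supported (R : nat) (f : Z -> C) : Prop :=
  forall x, (Z.of_nat R < Z.abs x)%Z -> f x = 0%C.

(* Exact convolution as soon as [f] is supported in [[-R, R]]. *)
Definition conv_on (R : nat) (f g : Z -> C) (x : Z) : C :=
  ball_sum R (fun y => Cmult (f y) (g (x - y)%Z)).

Lemma supported_mono R R' f : (R <= R')%nat -> supported R f -> supported R' f.
Proof. intros H S x Hx. apply S. lia. Qed.

Lemma supported_diff R (g : Z -> C) h : supported R g ->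
  supported (R + Z.abs_nat h) (fun z => Cminus (g (z + h)%Z) (g z)).
Proof. intros S z Hz. rewrite !S by lia. ring. Qed.

Lemma supported_conv_on R f g : supported R g -> supported (2 * R) (conv_on R f g).
Proof. intros Sg x Hx. apply wsumC_eq0. intros y Hy. rewrite Sg by lia. ring. Qed.

Lemma ball_l2_mono R R' f : (R <= R')%nat -> supported R f -> ball_l2 R' f = ball_l2 R f.
Proof. intros H S. apply l2sq_window; try lia. intros x Hx. apply S. lia. Qed.

Lemma ball_fourier_mono R R' f xi : (R <= R')%nat -> supported R f ->
  ball_fourier R' f xi = ball_fourier R f xi.
Proof. intros H S. apply wsumC_window; try lia. intros x Hx. rewrite S by lia. ring. Qed.

Lemma l2sq_le_ball_l2 R a n f : supported R f -> l2sq a n f <= ball_l2 R f.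
Proof.
  intros S.
  set (a' := Z.min a (- Z.of_nat R)). set (p := Z.to_nat (a - a')).
  set (q := Z.to_nat (Z.max (a + Z.of_nat n) (Z.of_nat R + 1) - (a + Z.of_nat n))).
  rewrite <- (l2sq_window (- Z.of_nat R) (2 * R + 1) a' (p + (n + q))); try (unfold p, q, a'; lia).
  2:{ intros x Hx. apply S. lia. }
  unfold l2sq. rewrite !wsumR_split.
  replace (a' + Z.of_nat p)%Z with a by (unfold p, a'; lia).
  assert (0 <= wsumR a' p (fun x => Cmod (f x) ^ 2)) by (apply wsumR_ge0; intros; apply pow2_ge_0).
  assert (0 <= wsumR (a + Z.of_nat n) q (fun x => Cmod (f x) ^ 2))
    by (apply wsumR_ge0; intros; apply pow2_ge_0).
  lra.
Qed.

Lemma conv_on_mono R R' f g : (R <= R')%nat -> supported R f ->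
  forall x, conv_on R' f g x = conv_on R f g x.
Proof.
  intros H Sf x. apply wsumC_window; try lia. intros y Hy. rewrite Sf by lia. ring.
Qed.

Lemma conv_on_plusl R f1 f2 g x :
  conv_on R (fun y => Cplus (f1 y) (f2 y)) g x = Cplus (conv_on R f1 g x) (conv_on R f2 g x).
Proof. unfold conv_on. rewrite <- wsumC_plus. apply wsumC_ext; intros; ring. Qed.
Lemma conv_on_plusr R f g1 g2 x :
  conv_on R f (fun y => Cplus (g1 y) (g2 y)) x = Cplus (conv_on R f g1 x) (conv_on R f g2 x).
Proof. unfold conv_on. rewrite <- wsumC_plus. apply wsumC_ext; intros; ring. Qed.

Lemma conv_on_diff R f g h x :
  Cminus (conv_on R f g (x + h)%Z) (conv_on R f g x) =
  conv_on R f (fun z => Cminus (g (z + h)%Z) (g z)) x.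
Proof.
  unfold conv_on. rewrite <- wsumC_minus. apply wsumC_ext. intros y _.
  replace (x + h - y)%Z with (x - y + h)%Z by lia. ring.
Qed.

Lemma conv_on_eq0 R f (g : Z -> C) : (forall y, g y = 0%C) -> forall x, conv_on R f g x = 0%C.
Proof. intros H x. apply wsumC_eq0. intros. rewrite H. ring. Qed.

Lemma conv_on_comm R f g : supported R f -> supported R g ->
  forall x, conv_on R f g x = conv_on R g f x.
Proof.
  intros Sf Sg x.
  destruct (Z_lt_le_dec (Z.of_nat (2 * R)) (Z.abs x)) as [Hx|Hx].
  { rewrite (supported_conv_on R f g Sg x), (supported_conv_on R g f Sf x) by lia. auto. }
  unfold conv_on. set (P := fun z => Cmult (g z) (f (x - z)%Z)).
  rewrite (wsumC_ext _ _ _ (fun y => (fun u => P (u + x)%Z) (- y)%Z)).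
  2:{ intros y _. unfold P. replace (- y + x)%Z with (x - y)%Z by lia.
      replace (x - (x - y))%Z with y by lia. ring. }
  rewrite (wsumC_reflect _ _ (fun u => P (u + x)%Z)), (wsumC_shift _ _ x P).
  set (c := Z.max (- Z.of_nat R) (x - Z.of_nat R)).
  set (m := Z.to_nat (Z.min (Z.of_nat R) (x + Z.of_nat R) - c + 1)).
  assert (HP : forall z, (z < c \/ c + Z.of_nat m <= z)%Z -> P z = 0%C).
  { intros z Hz. unfold P. unfold m, c in Hz.
    destruct (Z_lt_le_dec (Z.of_nat R) (Z.abs z)).
    - rewrite Sg by lia. ring.
    - rewrite Sf by lia. ring. }
  rewrite (wsumC_window c m) by (unfold m, c; lia || auto).
  symmetry. rewrite (wsumC_window c m) by (unfold m, c; lia || auto). auto.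
Qed.

Lemma fourier_conv_on R f g xi : supported R f -> supported R g ->
  ball_fourier (2 * R) (conv_on R f g) xi = Cmult (ball_fourier R f xi) (ball_fourier R g xi).
Proof.
  intros Sf Sg. unfold fourier at 1, conv_on.
  rewrite (wsumC_ext _ _ _ (fun x => ball_sum R (fun y =>
      Cmult (Cmult (f y) (expi (- (IZR y * xi))))
            (Cmult (g (x - y)%Z) (expi (- (IZR (x - y) * xi))))))).
  2:{ intros x _. rewrite <- wsumC_scalr. apply wsumC_ext; intros y _.
      replace (- (IZR x * xi)) with (- (IZR y * xi) + - (IZR (x - y) * xi))
        by (rewrite minus_IZR; ring).
      rewrite expi_add. ring. }
  rewrite wsumC_fubini. unfold fourier. rewrite <- wsumC_scalr. apply wsumC_ext. intros y Hy.
  rewrite wsumC_scal. f_equal.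
  rewrite (wsumC_shift _ _ (- y) (fun z => Cmult (g z) (expi (- (IZR z * xi))))).
  apply wsumC_window; try lia. intros x Hx. rewrite Sg by lia. ring.
Qed.

Lemma ball_sum_conv_on R f g : supported R f -> supported R g ->
  ball_sum (2 * R) (conv_on R f g) = Cmult (ball_sum R f) (ball_sum R g).
Proof.
  intros Sf Sg.
  assert (fourier0 : forall R h, ball_fourier R h 0 = ball_sum R h).
  { intros R' h. apply wsumC_ext; intros. rewrite Rmult_0_r, Ropp_0, expi_0. ring. }
  rewrite <- !fourier0. apply fourier_conv_on; auto.
Qed.

Lemma Rabs_ball_freq_le_PI R k :
  (- Z.of_nat (2 * R) <= k < - Z.of_nat (2 * R) + Z.of_nat (2 * (2 * R) + 1))%Z ->
  Rabs (2 * PI * IZR k / INR (2 * (2 * R) + 1)) <= PI.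
Proof.
  intros Hk. assert (HPI := PI_RGT_0).
  assert (Hn : 0 < INR (2 * (2 * R) + 1)) by (apply lt_0_INR; lia).
  unfold Rdiv. rewrite Rabs_mult, Rabs_mult, Rabs_inv, (Rabs_right (INR _)), Rabs_right by lra.
  rewrite <- abs_IZR.
  assert (2 * IZR (Z.abs k) <= INR (2 * (2 * R) + 1))
    by (rewrite INR_IZR_INZ, <- mult_IZR; apply IZR_le; lia).
  apply Rmult_le_reg_r with (INR (2 * (2 * R) + 1)); auto.
  rewrite Rmult_assoc, Rinv_l by lra. nra.
Qed.

(* No aliasing: [conv_on R f g] lives in [[-2R, 2R]], the window of the transform of size
   [4R + 1]. *)
Lemma ball_l2_conv_on_le R f g B : supported R f -> supported R g ->
  (forall xi, Rabs xi <= PI -> Cmod (ball_fourier R f xi) <= B) ->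
  ball_l2 (2 * R) (conv_on R f g) <= B ^ 2 * ball_l2 R g.
Proof.
  intros Sf Sg HB. set (n := (2 * (2 * R) + 1)%nat).
  assert (Hn : 0 < INR n) by (apply lt_0_INR; unfold n; lia).
  assert (HB0 : 0 <= B).
  { eapply Rle_trans; [apply Cmod_ge_0|]. apply (HB 0). rewrite Rabs_R0. apply Rlt_le, PI_RGT_0. }
  apply Rmult_le_reg_l with (INR n); auto.
  unfold n. rewrite <- plancherel, <- (ball_l2_mono R (2 * R) g) by (auto; lia).
  replace (INR (2 * (2 * R) + 1) * (B ^ 2 * ball_l2 (2 * R) g))
    with (B ^ 2 * (INR (2 * (2 * R) + 1) * ball_l2 (2 * R) g)) by ring.
  rewrite <- plancherel, <- wsumR_scal by lia. apply wsumR_le. intros k Hk.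
  rewrite fourier_conv_on, Cmod_mult, (ball_fourier_mono R (2 * R) g) by (auto; lia).
  assert (H1 := HB _ (Rabs_ball_freq_le_PI R k Hk)).
  rewrite Rpow_mult_distr. apply Rmult_le_compat_r; [apply pow2_ge_0|].
  apply pow_incr. split; [apply Cmod_ge_0|auto].
Qed.

(** * Fourier decay of a CZ building block *)

Lemma pow2_ge1 k : (1 <= 2 ^ k)%nat.
Proof. induction k; simpl; lia. Qed.
Lemma dy_nat k : dy k = Z.of_nat (2 ^ k).
Proof. unfold dy. rewrite Nat2Z.inj_pow. auto. Qed.
Lemma IZR_dy k : IZR (dy k) = INR (2 ^ k).
Proof. rewrite dy_nat, <- INR_IZR_INZ. auto. Qed.

Lemma rpow_ge0 a w : 0 <= rpow a w.
Proof. unfold rpow. destruct (Rle_dec a 0); [lra|]. left; apply exp_pos. Qed.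

Lemma CZblock_ball w K k D : CZblock w K k D ->
  ball_sum (2 ^ k) K = 0%C /\ supported (2 ^ k) K /\
  ball_l2 (2 ^ k) K <= D ^ 2 / INR (2 ^ k) /\
  (forall h : Z, ball_l2 (2 ^ k + Z.abs_nat h) (fun x => Cminus (K (x + h)%Z) (K x))
                 <= D ^ 2 / INR (2 ^ k) * rpow (IZR (Z.abs h) / INR (2 ^ k)) w).
Proof.
  intros [Hmean [Hsupp [Hl2 Hsmooth]]]. rewrite <- IZR_dy. rewrite dy_nat in *.
  rewrite <- INR_IZR_INZ in *. unfold l2sq. assert (Hk := pow2_ge1 k).
  repeat split.
  - rewrite zsumC_wsumC in Hmean. rewrite <- Hmean. f_equal. lia.
  - intros x Hx. apply Hsupp. lia.
  - rewrite zsumR_wsumR in Hl2. eapply Rle_trans; [|apply Hl2]. right. f_equal. lia.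
  - intros h. specialize (Hsmooth h). rewrite zsumR_wsumR in Hsmooth.
    eapply Rle_trans; [|apply Hsmooth]. right. f_equal; lia.
Qed.

Lemma supported_CZblock w K k D : CZblock w K k D -> supported (2 ^ k) K.
Proof. intros H. apply (CZblock_ball w K k D H). Qed.

(* Mean zero lets one replace [expi (- x xi)] by [expi (- x xi) - 1], which is [O(R |xi|)]. *)
Lemma Cmod_ball_fourier_mean0_le R K xi : ball_sum R K = 0%C ->
  Cmod (ball_fourier R K xi) <=
  INR R * Rabs xi * (sqrt (INR (2 * R + 1)) * sqrt (ball_l2 R K)).
Proof.
  intros H0. unfold fourier.
  replace (ball_sum R (fun x => Cmult (K x) (expi (- (IZR x * xi))))) with
    (ball_sum R (fun x => Cmult (K x) (Cminus (expi (- (IZR x * xi))) (RtoC 1)))).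
  2:{ rewrite (wsumC_ext _ _ (fun x => Cmult (K x) (Cminus (expi (- (IZR x * xi))) (RtoC 1)))
        (fun x => Cminus (Cmult (K x) (expi (- (IZR x * xi)))) (Cmult (K x) (RtoC 1))))
        by (intros; ring).
      rewrite wsumC_minus, wsumC_scalr, H0. ring. }
  eapply Rle_trans; [apply Cmod_wsumC_le|].
  apply Rle_trans with (wsumR (- Z.of_nat R) (2 * R + 1) (fun x => INR R * Rabs xi * Cmod (K x))).
  - apply wsumR_le. intros x Hx. rewrite Cmod_mult, Rmult_comm.
    apply Rmult_le_compat_r; [apply Cmod_ge_0|].
    eapply Rle_trans; [apply Cmod_expi_sub1_le|].
    rewrite Rabs_Ropp, Rabs_mult. apply Rmult_le_compat_r; [apply Rabs_pos|].
    rewrite INR_IZR_INZ, <- abs_IZR. apply IZR_le. lia.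
  - rewrite wsumR_scal. apply Rmult_le_compat_l.
    + apply Rmult_le_pos; [apply pos_INR|apply Rabs_pos].
    + apply l1_le_l2.
Qed.

Lemma Cmod_ball_fourier_diff_le R (h : nat) K xi : supported R K ->
  Cmod (ball_fourier R K xi) * Cmod (Cminus (expi (INR h * xi)) (RtoC 1)) <=
  sqrt (INR (2 * (R + h) + 1)) *
  sqrt (ball_l2 (R + h) (fun x => Cminus (K (x + Z.of_nat h)%Z) (K x))).
Proof.
  intros S. rewrite <- Cmod_mult.
  replace (Cmult (ball_fourier R K xi) (Cminus (expi (INR h * xi)) (RtoC 1))) with
    (ball_fourier (R + h) (fun x => Cminus (K (x + Z.of_nat h)%Z) (K x)) xi).
  - eapply Rle_trans; [apply Cmod_wsumC_le|]. eapply Rle_trans; [|apply l1_le_l2].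
    right. apply wsumR_ext. intros. rewrite Cmod_mult, Cmod_expi. ring.
  - set (g := fun z => Cmult (K z) (expi (- (IZR z * xi)))).
    unfold fourier. rewrite (wsumC_ext _ _ _ (fun x =>
      Cminus (Cmult (expi (INR h * xi)) (g (x + Z.of_nat h)%Z)) (g x))).
    2:{ intros x _. unfold g. rewrite plus_IZR, <- INR_IZR_INZ.
        assert (E : expi (- (IZR x * xi)) =
                    Cmult (expi (INR h * xi)) (expi (- ((IZR x + INR h) * xi))))
          by (rewrite <- expi_add; f_equal; ring).
        rewrite E. ring. }
    rewrite wsumC_minus, wsumC_scal, (wsumC_shift _ _ (Z.of_nat h) g).
    rewrite (wsumC_window (- Z.of_nat R) (2 * R + 1) (- Z.of_nat (R + h) + Z.of_nat h)),
            (wsumC_window (- Z.of_nat R) (2 * R + 1) (- Z.of_nat (R + h))); try lia.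
    + unfold g. ring.
    + intros x Hx. unfold g. rewrite S by lia. ring.
    + intros x Hx. unfold g. rewrite S by lia. ring.
Qed.

(* For [0 < t <= PI] take [h] the least integer above [PI / (3 t)]: then [h t] lies in
   [(PI/3, PI/3 + t]], where [cos <= 1/2], so [|expi (h xi) - 1| >= 1]. *)
Lemma exists_shift_expi_far t : 0 < t <= PI -> exists h : nat, (1 <= h)%nat /\ INR h * t <= 6 /\
  forall xi, Rabs xi = t -> 1 <= Cmod (Cminus (expi (INR h * xi)) (RtoC 1)).
Proof.
  intros [Ht HtPI]. assert (HPI4 := PI_4). assert (HPI3 : 3 < PI) by (assert (H := PI2_3_2); lra).
  destruct (archimed (PI / (3 * t))) as [A1 A2].
  set (u := up (PI / (3 * t))) in *.
  assert (0 < PI / (3 * t)) by (apply Rdiv_lt_0_compat; lra).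
  assert (Hu : (0 < u)%Z) by (apply lt_IZR; lra).
  exists (Z.to_nat u). rewrite INR_IZR_INZ, Z2Nat.id by lia.
  assert (Hlow : PI / 3 < IZR u * t).
  { apply Rmult_lt_compat_r with (r := t) in A1; auto.
    replace (PI / (3 * t) * t) with (PI / 3) in A1 by (field; lra). lra. }
  assert (Hup : IZR u * t <= PI / 3 + t).
  { assert (Hut : IZR u <= PI / (3 * t) + 1) by lra.
    apply Rmult_le_compat_r with (r := t) in Hut; [|lra].
    replace ((PI / (3 * t) + 1) * t) with (PI / 3 + t) in Hut by (field; lra). lra. }
  repeat split; try lia; try lra.
  intros xi Hxi.
  assert (Hc : cos (IZR u * xi) <= 1 / 2).
  { replace (cos (IZR u * xi)) with (cos (IZR u * t)).
    2:{ destruct (Rle_dec 0 xi).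
        - rewrite Rabs_right in Hxi by lra. subst; auto.
        - rewrite Rabs_left in Hxi by lra. rewrite <- Hxi, <- cos_neg. f_equal. ring. }
    destruct (Rle_dec (IZR u * t) PI).
    - rewrite <- cos_PI3. apply cos_decr_1; lra.
    - assert (cos (IZR u * t) <= 0) by (apply cos_le_0; lra). lra. }
  assert (H1 := Cmod_expi_sub1_sq (IZR u * xi)).
  assert (H2 := Cmod_ge_0 (Cminus (expi (IZR u * xi)) (RtoC 1))).
  nra.
Qed.

Definition profile (b x : R) : R := if Rle_dec x 1 then x else Rpower x (- b).

Definition block_fourier_const (w : R) : R := sqrt 15 * Rpower 6 (w / 2).

Lemma Cmod_block_fourier_low w K k D : 0 < w -> 0 < D -> CZblock w K k D ->
  forall xi, INR (2 ^ k) * Rabs xi <= 1 ->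
  Cmod (ball_fourier (2 ^ k) K xi) <= block_fourier_const w * D * (INR (2 ^ k) * Rabs xi).
Proof.
  intros Hw HD0 HB xi Hx. destruct (CZblock_ball w K k D HB) as [Hmean [_ [Hl2 _]]].
  set (s := (2 ^ k)%nat) in *. assert (Hs : 1 <= INR s) by (apply (le_INR 1), pow2_ge1).
  assert (Hc : sqrt 3 <= block_fourier_const w).
  { unfold block_fourier_const. assert (1 <= Rpower 6 (w / 2)).
    { rewrite <- (Rpower_O 6) by lra. apply Rle_Rpower; lra. }
    assert (sqrt 3 <= sqrt 15) by (apply sqrt_le_1_alt; lra).
    assert (0 <= sqrt 3) by apply sqrt_pos. nra. }
  assert (HD : 0 <= D ^ 2) by apply pow2_ge_0.
  assert (Hl2D : sqrt (INR (2 * s + 1)) * sqrt (ball_l2 s K) <= sqrt 3 * D).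
  { rewrite <- sqrt_mult_alt by apply pos_INR.
    rewrite <- (sqrt_pow2 D), <- sqrt_mult_alt by lra.
    apply sqrt_le_1_alt. rewrite plus_INR, mult_INR. simpl (INR 2); simpl (INR 1).
    apply Rle_trans with ((2 * INR s + 1) * (D ^ 2 / INR s)); [apply Rmult_le_compat_l; lra|].
    apply Rle_trans with (3 * INR s * (D ^ 2 / INR s)).
    + apply Rmult_le_compat_r; [apply Rdiv_le_0_compat|]; lra.
    + right. field. lra. }
  eapply Rle_trans; [apply Cmod_ball_fourier_mean0_le; auto|].
  assert (0 <= INR s * Rabs xi) by (apply Rmult_le_pos; [apply pos_INR|apply Rabs_pos]).
  assert (0 <= sqrt (INR (2 * s + 1)) * sqrt (ball_l2 s K))
    by (apply Rmult_le_pos; apply sqrt_pos).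
  rewrite (Rmult_comm (block_fourier_const w * D)). apply Rmult_le_compat_l; auto.
  apply Rle_trans with (sqrt 3 * D); auto. apply Rmult_le_compat_r; lra.
Qed.

Lemma sqrt_Rpower a b : 0 < a -> sqrt (Rpower a b) = Rpower a (b / 2).
Proof.
  intros. rewrite <- Rpower_sqrt by apply exp_pos. rewrite Rpower_mult. f_equal; field.
Qed.
Lemma Rpower_div a x b : 0 < a -> 0 < x -> Rpower (a / x) b = Rpower a b * Rpower x (- b).
Proof.
  intros. unfold Rdiv. rewrite <- Rpower_mult_distr by (try apply Rinv_0_lt_compat; lra).
  f_equal. unfold Rpower. rewrite ln_Rinv by lra. f_equal. ring.
Qed.

Lemma sqrt_shift_bound_le w D s h x : 0 < w -> 0 < D -> 1 <= s -> 1 <= h < 6 * s -> 0 < x ->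
  h / s <= 6 / x ->
  sqrt ((2 * s + 2 * h + 1) * (D ^ 2 / s * Rpower (h / s) w)) <=
  block_fourier_const w * D * Rpower x (- (w / 2)).
Proof.
  intros Hw HD Hs Hh Hx Hratio.
  replace (block_fourier_const w * D * Rpower x (- (w / 2)))
    with (sqrt (15 * D ^ 2 * Rpower (6 / x) w)).
  2:{ rewrite !sqrt_mult_alt, sqrt_pow2, sqrt_Rpower, Rpower_div by
        (try apply Rmult_le_pos; try apply pow2_ge_0; try apply Rdiv_lt_0_compat; lra).
      unfold block_fourier_const. ring. }
  apply sqrt_le_1_alt.
  assert (0 < Rpower (h / s) w <= Rpower (6 / x) w)
    by (split; [apply exp_pos | apply Rle_Rpower_l; [lra | split; [apply Rdiv_lt_0_compat|]; lra]]).
  assert (0 <= D ^ 2 / s) by (apply Rdiv_le_0_compat; [apply pow2_ge_0 | lra]).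
  apply Rle_trans with ((2 * s + 2 * h + 1) * (D ^ 2 / s * Rpower (6 / x) w)).
  - apply Rmult_le_compat_l; [lra|]. apply Rmult_le_compat_l; lra.
  - apply Rle_trans with (15 * s * (D ^ 2 / s * Rpower (6 / x) w)).
    + apply Rmult_le_compat_r; [apply Rmult_le_pos|]; lra.
    + right. field. lra.
Qed.

(* Smoothness at a shift [h ~ 1 / |xi|] with [|expi (h xi) - 1| >= 1]. *)
Lemma Cmod_block_fourier_high w K k D : 0 < w -> 0 < D -> CZblock w K k D ->
  forall xi, Rabs xi <= PI -> 1 < INR (2 ^ k) * Rabs xi ->
  Cmod (ball_fourier (2 ^ k) K xi) <=
  block_fourier_const w * D * Rpower (INR (2 ^ k) * Rabs xi) (- (w / 2)).
Proof.
  intros Hw HD HB xi HxiPI Hx. destruct (CZblock_ball w K k D HB) as [_ [Hsupp [_ Hsmooth]]].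
  set (s := (2 ^ k)%nat) in *. assert (Hs : 1 <= INR s) by (apply (le_INR 1), pow2_ge1).
  set (x := INR s * Rabs xi) in *.
  assert (Ht : 0 < Rabs xi)
    by (destruct (Rabs_pos xi) as [|E]; [auto | unfold x in Hx; rewrite <- E in Hx; lra]).
  destruct (exists_shift_expi_far (Rabs xi) (conj Ht HxiPI)) as [h [Hh1 [Hh6 Hfar]]].
  assert (HhR : 1 <= INR h) by (apply (le_INR 1); lia).
  assert (Hratio : INR h / INR s <= 6 / x).
  { apply Rmult_le_reg_r with x; [lra|]. unfold x.
    replace (6 / (INR s * Rabs xi) * (INR s * Rabs xi)) with 6 by (field; lra).
    replace (INR h / INR s * (INR s * Rabs xi)) with (INR h * Rabs xi) by (field; lra). lra. }
  assert (Hdiff := Hsmooth (Z.of_nat h)).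
  rewrite Zabs2Nat.id, Z.abs_eq, <- INR_IZR_INZ in Hdiff by lia.
  unfold rpow in Hdiff. destruct (Rle_dec (INR h / INR s) 0).
  { assert (0 < INR h / INR s) by (apply Rdiv_lt_0_compat; lra). lra. }
  assert (Hhs : INR h < 6 * INR s).
  { apply Rmult_lt_reg_r with (Rabs xi); auto. unfold x in Hx. lra. }
  apply Rle_trans with
    (sqrt ((2 * INR s + 2 * INR h + 1) * (D ^ 2 / INR s * Rpower (INR h / INR s) w))).
  2:{ apply sqrt_shift_bound_le; auto; lra. }
  set (F := Cmod (ball_fourier s K xi)). assert (HF : 0 <= F) by apply Cmod_ge_0.
  apply Rle_trans with (F * Cmod (Cminus (expi (INR h * xi)) (RtoC 1))).
  { assert (H1 := Hfar xi eq_refl). nra. }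
  eapply Rle_trans; [apply Cmod_ball_fourier_diff_le; auto|].
  replace (2 * INR s + 2 * INR h + 1) with (INR (2 * (s + h) + 1))
    by (rewrite plus_INR, mult_INR, plus_INR; simpl; ring).
  rewrite sqrt_mult_alt by apply pos_INR.
  apply Rmult_le_compat_l; [apply sqrt_pos|]. apply sqrt_le_1_alt. auto.
Qed.

Lemma Cmod_block_fourier_le w K k D : 0 < w -> 0 < D -> CZblock w K k D ->
  forall xi, Rabs xi <= PI ->
  Cmod (ball_fourier (2 ^ k) K xi) <=
  block_fourier_const w * D * profile (w / 2) (INR (2 ^ k) * Rabs xi).
Proof.
  intros Hw HD HB xi Hxi. unfold profile. destruct (Rle_dec (INR (2 ^ k) * Rabs xi) 1).
  - apply Cmod_block_fourier_low; auto.
  - apply Cmod_block_fourier_high; auto. lra.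
Qed.

Fixpoint psumR (T : nat -> R) (n : nat) : R :=
  match n with O => 0 | S n' => psumR T n' + T n' end.

(* The terms increase geometrically up to 1 and decrease geometrically after. *)
Lemma psumR_profile_dyadic_le b t : 0 < b -> 0 <= t -> forall n,
  psumR (fun k => profile b (2 ^ k * t)) n <= 2 + 1 / (1 - Rpower 2 (- b)).
Proof.
  intros Hb Ht. set (q := Rpower 2 (- b)).
  assert (Hlt1 : forall x, 1 < x -> Rpower x (- b) < 1)
    by (intros; rewrite <- (Rpower_O x) by lra; apply Rpower_lt; lra).
  assert (Hq : 0 < q < 1) by (split; [apply exp_pos | apply Hlt1; lra]).
  set (P := psumR (fun k => profile b (2 ^ k * t))).
  assert (Inv : forall n, (2 ^ n * t <= 1 -> P n <= 2 ^ n * t) /\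
     (1 < 2 ^ n * t -> P n <= 2 + (1 - Rpower (2 ^ n * t) (- b)) / (1 - q))).
  { induction n as [|n [I1 I2]].
    - unfold P; simpl. split; intros; [lra|].
      assert (Rpower (1 * t) (- b) < 1) by (apply Hlt1; lra).
      assert (0 <= (1 - Rpower (1 * t) (- b)) / (1 - q)) by (apply Rdiv_le_0_compat; lra). lra.
    - unfold P; simpl psumR; fold P. unfold profile.
      replace (2 ^ S n * t) with (2 * (2 ^ n * t)) by (simpl; ring).
      assert (0 <= 2 ^ n * t) by (apply Rmult_le_pos; auto; apply pow_le; lra).
      destruct (Rle_dec (2 ^ n * t) 1) as [Hle|Hgt].
      + specialize (I1 Hle). split; intros H2; [lra|].
        assert (Rpower (2 * (2 ^ n * t)) (- b) < 1) by (apply Hlt1; lra).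
        assert (0 <= (1 - Rpower (2 * (2 ^ n * t)) (- b)) / (1 - q))
          by (apply Rdiv_le_0_compat; lra).
        lra.
      + specialize (I2 ltac:(lra)). split; intros H2; [lra|].
        rewrite <- (Rpower_mult_distr 2 (2 ^ n * t) (- b)) by lra. fold q.
        set (y := Rpower (2 ^ n * t) (- b)) in *.
        apply Rle_trans with (2 + (1 - y) / (1 - q) + y); [lra|].
        right. field. lra. }
  intros n. destruct (Inv n) as [I1 I2].
  assert (0 < 1 / (1 - q)) by (apply Rdiv_lt_0_compat; lra).
  destruct (Rle_dec (2 ^ n * t) 1) as [Hx|Hx]; [specialize (I1 Hx); lra|].
  specialize (I2 ltac:(lra)).
  assert (0 < Rpower (2 ^ n * t) (- b)) by apply exp_pos.
  assert ((1 - Rpower (2 ^ n * t) (- b)) / (1 - q) <= 1 / (1 - q)).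
  { unfold Rdiv. apply Rmult_le_compat_r; [left; apply Rinv_0_lt_compat|]; lra. }
  lra.
Qed.

Fixpoint psum (F : nat -> Z -> C) (n : nat) (x : Z) : C :=
  match n with O => 0%C | S n' => Cplus (psum F n' x) (F n' x) end.

Lemma supported_psum F n R : (forall i, (i < n)%nat -> supported R (F i)) -> supported R (psum F n).
Proof.
  induction n as [|n IH]; intros H x Hx; simpl; auto.
  rewrite IH, H by (auto; lia). ring.
Qed.

Lemma supported_psum_CZblock w F D n R : (forall i, CZblock w (F i) i D) ->
  (2 ^ n <= 2 * R)%nat -> supported R (psum F n).
Proof.
  intros HB HR. apply supported_psum. intros i Hi.
  apply (supported_mono (2 ^ i)); [|eapply supported_CZblock, HB].
  assert (2 ^ S i <= 2 ^ n)%nat by (apply Nat.pow_le_mono_r; lia). simpl in *. lia.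
Qed.

Definition multiplier_const (w : R) : R :=
  block_fourier_const w * (2 + 1 / (1 - Rpower 2 (- (w / 2)))).

Lemma multiplier_const_pos w : 0 < w -> 0 < multiplier_const w.
Proof.
  intros Hw. unfold multiplier_const, block_fourier_const.
  assert (Rpower 2 (- (w / 2)) < 1) by (rewrite <- (Rpower_O 2) by lra; apply Rpower_lt; lra).
  assert (0 < 1 / (1 - Rpower 2 (- (w / 2)))) by (apply Rdiv_lt_0_compat; lra).
  apply Rmult_lt_0_compat; [|lra].
  apply Rmult_lt_0_compat; [apply sqrt_lt_R0; lra | apply exp_pos].
Qed.

Lemma Cmod_fourier_psum_le w F n D R : 0 < w -> 0 < D ->
  (forall i, (i < n)%nat -> CZblock w (F i) i D) -> (2 ^ n <= 2 * R)%nat ->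
  forall xi, Rabs xi <= PI ->
  Cmod (ball_fourier R (psum F n) xi) <= multiplier_const w * D.
Proof.
  intros Hw HD HB HR xi Hxi.
  assert (HD0 : 0 < block_fourier_const w * D).
  { unfold block_fourier_const. apply Rmult_lt_0_compat; auto.
    apply Rmult_lt_0_compat; [apply sqrt_lt_R0; lra | apply exp_pos]. }
  apply Rle_trans with
    (block_fourier_const w * D * psumR (fun k => profile (w / 2) (2 ^ k * Rabs xi)) n).
  - induction n as [|n IH]; cbn [psum psumR].
    + unfold fourier. rewrite wsumC_eq0, Cmod_0 by (intros; ring). lra.
    + replace (ball_fourier R (fun x => Cplus (psum F n x) (F n x)) xi)
        with (Cplus (ball_fourier R (psum F n) xi) (ball_fourier R (F n) xi))
        by (unfold fourier; rewrite <- wsumC_plus; apply wsumC_ext; intros; ring).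
      eapply Rle_trans; [apply Cmod_triangle|].
      rewrite Rmult_plus_distr_l. apply Rplus_le_compat.
      * apply IH; [intros; apply HB; lia|]. simpl in HR. assert (Hp := pow2_ge1 n). lia.
      * assert (HBn : CZblock w (F n) n D) by (apply HB; lia).
        assert (HRn : (2 ^ n <= R)%nat) by (simpl in HR; lia).
        rewrite (ball_fourier_mono _ _ _ _ HRn (supported_CZblock _ _ _ _ HBn)).
        replace (2 ^ n) with (INR (2 ^ n)) by (rewrite pow_INR; f_equal; simpl; ring).
        apply Cmod_block_fourier_le; auto.
  - unfold multiplier_const.
    replace (block_fourier_const w * (2 + 1 / (1 - Rpower 2 (- (w / 2)))) * D)
      with (block_fourier_const w * D * (2 + 1 / (1 - Rpower 2 (- (w / 2))))) by ring.
    apply Rmult_le_compat_l; [lra|]. apply psumR_profile_dyadic_le; [lra|apply Rabs_pos].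
Qed.

(** * The blocks of [K * L] *)

Lemma ball_CZblock w K k D :
  ball_sum (2 ^ k) K = 0%C -> supported (2 ^ k) K ->
  ball_l2 (2 ^ k) K <= D ^ 2 / INR (2 ^ k) ->
  (forall h : Z, ball_l2 (2 ^ k + Z.abs_nat h) (fun x => Cminus (K (x + h)%Z) (K x))
                 <= D ^ 2 / INR (2 ^ k) * rpow (IZR (Z.abs h) / INR (2 ^ k)) w) ->
  CZblock w K k D.
Proof.
  intros Hmean Hsupp Hl2 Hsmooth. assert (Hk := pow2_ge1 k).
  unfold CZblock. rewrite IZR_dy, dy_nat, zsumC_wsumC, zsumR_wsumR.
  repeat split.
  - rewrite <- Hmean. f_equal. lia.
  - intros x Hx. apply Hsupp. lia.
  - eapply Rle_trans; [|apply Hl2]. right. unfold l2sq. f_equal. lia.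
  - intros h. rewrite zsumR_wsumR. eapply Rle_trans; [|apply Hsmooth].
    right. unfold l2sq. f_equal; lia.
Qed.

Lemma CZblock_zero w k D : 0 < D -> CZblock w (fun _ => 0%C) k D.
Proof.
  intros HD. assert (Hs : 0 < INR (2 ^ k)) by (apply lt_0_INR; assert (H := pow2_ge1 k); lia).
  assert (Hl2 : forall R, ball_l2 R (fun _ => 0%C) = 0).
  { intros R. apply wsumR_eq0. intros. rewrite Cmod_0. ring. }
  apply ball_CZblock.
  - apply wsumC_eq0. auto.
  - intros x _. auto.
  - rewrite Hl2. apply Rdiv_le_0_compat; [apply pow2_ge_0|auto].
  - intros h. rewrite (l2sq_ext _ _ _ (fun _ => 0%C)) by (intros; ring). rewrite Hl2.
    apply Rmult_le_pos; [apply Rdiv_le_0_compat; [apply pow2_ge_0|auto] | apply rpow_ge0].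
Qed.

Lemma rpow_double a w : 0 <= a -> rpow (2 * a) w = Rpower 2 w * rpow a w.
Proof.
  intros Ha. unfold rpow. destruct (Rle_dec (2 * a) 0), (Rle_dec a 0); try lra.
  rewrite Rpower_mult_distr by lra. auto.
Qed.

Definition conv_block (Kb Lb : nat -> Z -> C) (k : nat) : Z -> C :=
  fun x => Cplus (conv_on (2 ^ k) (psum Kb (S k)) (Lb k) x) (conv_on (2 ^ k) (psum Lb k) (Kb k) x).

Definition conv_blocks (Kb Lb : nat -> Z -> C) (m : nat) : Z -> C :=
  match m with O => fun _ => 0%C | S k => conv_block Kb Lb k end.

Definition conv_const (w : R) : R := 3 * multiplier_const w * Rpower 2 (w / 2).

Lemma conv_const_pos w : 0 < w -> 0 < conv_const w.
Proof.
  intros Hw. unfold conv_const.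
  assert (H0 := multiplier_const_pos w Hw). assert (H1 := exp_pos (w / 2 * ln 2)).
  unfold Rpower. nra.
Qed.

Lemma conv_const_sq w : conv_const w ^ 2 = (3 * multiplier_const w) ^ 2 * Rpower 2 w.
Proof.
  unfold conv_const. replace (Rpower 2 w) with (Rpower 2 (w / 2) * Rpower 2 (w / 2)); [ring|].
  rewrite <- Rpower_plus. f_equal. field.
Qed.

Lemma conv_const_split M DK DL Y : 0 <= Y ->
  2 * ((M * DK) ^ 2 * (DL ^ 2 * Y)) + 2 * ((M * DL) ^ 2 * (DK ^ 2 * Y)) <=
  (3 * M * DK * DL) ^ 2 * Y / 2.
Proof.
  intros HY. assert (0 <= (M * DK * DL) ^ 2 * Y) by (apply Rmult_le_pos; [apply pow2_ge_0|auto]).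
  replace (2 * ((M * DK) ^ 2 * (DL ^ 2 * Y)) + 2 * ((M * DL) ^ 2 * (DK ^ 2 * Y)))
    with (4 * ((M * DK * DL) ^ 2 * Y)) by ring.
  replace ((3 * M * DK * DL) ^ 2 * Y / 2) with (9 / 2 * ((M * DK * DL) ^ 2 * Y)) by field.
  lra.
Qed.

Section ConvBlock.

Variables (w DK DL : R) (Kb Lb : nat -> Z -> C) (k : nat).
Hypotheses (Hw : 0 < w) (HDK : 0 < DK) (HDL : 0 < DL).
Hypotheses (BK : forall i, CZblock w (Kb i) i DK) (BL : forall i, CZblock w (Lb i) i DL).

Lemma supported_conv_block : supported (2 * 2 ^ k) (conv_block Kb Lb k).
Proof.
  intros x Hx. unfold conv_block.
  rewrite !supported_conv_on; try (apply (supported_CZblock w _ _ _ (BK k)) ||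
                                   apply (supported_CZblock w _ _ _ (BL k))); auto. ring.
Qed.

Lemma conv_block_mean0 : ball_sum (2 * 2 ^ k) (conv_block Kb Lb k) = 0%C.
Proof.
  destruct (CZblock_ball w _ _ _ (BK k)) as [K0 [SK _]].
  destruct (CZblock_ball w _ _ _ (BL k)) as [L0 [SL _]].
  unfold conv_block. rewrite wsumC_plus, !ball_sum_conv_on, K0, L0; auto; [ring|..];
    eapply supported_psum_CZblock; eauto; simpl; lia.
Qed.

Lemma ball_l2_conv_block_le :
  ball_l2 (2 * 2 ^ k) (conv_block Kb Lb k) <= (conv_const w * DK * DL) ^ 2 / INR (2 * 2 ^ k).
Proof.
  destruct (CZblock_ball w _ _ _ (BK k)) as [_ [SK [K2 _]]].
  destruct (CZblock_ball w _ _ _ (BL k)) as [_ [SL [L2 _]]].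
  set (R := (2 ^ k)%nat) in *. assert (HR : 1 <= INR R) by (apply (le_INR 1), pow2_ge1).
  assert (SA : supported R (psum Kb (S k))) by (eapply supported_psum_CZblock; eauto; simpl; lia).
  assert (SB : supported R (psum Lb k)) by (eapply supported_psum_CZblock; eauto; simpl; lia).
  assert (FA := Cmod_fourier_psum_le w Kb (S k) DK R Hw HDK (fun i _ => BK i) ltac:(simpl; lia)).
  assert (FB := Cmod_fourier_psum_le w Lb k DL R Hw HDL (fun i _ => BL i) ltac:(simpl; lia)).
  assert (E1 := ball_l2_conv_on_le R _ _ _ SA SL FA).
  assert (E2 := ball_l2_conv_on_le R _ _ _ SB SK FB).
  set (M := multiplier_const w) in *.
  eapply Rle_trans; [apply l2sq_plus_le|].
  eapply Rle_trans with
    (2 * ((M * DK) ^ 2 * (DL ^ 2 * / INR R)) + 2 * ((M * DL) ^ 2 * (DK ^ 2 * / INR R))).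
  { apply Rplus_le_compat; apply Rmult_le_compat_l; try lra;
      (eapply Rle_trans; [eassumption|]); apply Rmult_le_compat_l; auto using pow2_ge_0. }
  eapply Rle_trans; [apply conv_const_split; left; apply Rinv_0_lt_compat; lra|].
  replace ((conv_const w * DK * DL) ^ 2 / INR (2 * R))
    with (Rpower 2 w * ((3 * M * DK * DL) ^ 2 * / INR R / 2)).
  2:{ replace ((conv_const w * DK * DL) ^ 2) with (conv_const w ^ 2 * DK ^ 2 * DL ^ 2) by ring.
      rewrite conv_const_sq, mult_INR. fold M. simpl. field. lra. }
  assert (H2w : 1 <= Rpower 2 w) by (rewrite <- (Rpower_O 2) by lra; apply Rle_Rpower; lra).
  assert (0 < / INR R) by (apply Rinv_0_lt_compat; lra).
  assert (0 <= (3 * M * DK * DL) ^ 2 * / INR R / 2)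
    by (apply Rmult_le_pos; [apply Rmult_le_pos; [apply pow2_ge_0|lra]|lra]).
  nra.
Qed.

Lemma conv_block_diff h x :
  Cminus (conv_block Kb Lb k (x + h)%Z) (conv_block Kb Lb k x) =
  Cplus
    (conv_on (2 ^ k + Z.abs_nat h) (psum Kb (S k)) (fun z => Cminus (Lb k (z + h)%Z) (Lb k z)) x)
    (conv_on (2 ^ k + Z.abs_nat h) (psum Lb k) (fun z => Cminus (Kb k (z + h)%Z) (Kb k z)) x).
Proof.
  unfold conv_block.
  rewrite !(conv_on_mono (2 ^ k) (2 ^ k + Z.abs_nat h))
    by (lia || eapply supported_psum_CZblock; eauto; simpl; lia).
  rewrite <- !conv_on_diff. ring.
Qed.

Lemma ball_l2_diff_conv_block_le h :
  ball_l2 (2 * 2 ^ k + Z.abs_nat h)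
    (fun x => Cminus (conv_block Kb Lb k (x + h)%Z) (conv_block Kb Lb k x))
  <= (conv_const w * DK * DL) ^ 2 / INR (2 * 2 ^ k) * rpow (IZR (Z.abs h) / INR (2 * 2 ^ k)) w.
Proof.
  destruct (CZblock_ball w _ _ _ (BK k)) as [_ [SK [_ K3]]].
  destruct (CZblock_ball w _ _ _ (BL k)) as [_ [SL [_ L3]]].
  rewrite <- (ball_l2_mono (2 * 2 ^ k + Z.abs_nat h) (2 * (2 ^ k + Z.abs_nat h)))
    by (lia || apply supported_diff, supported_conv_block).
  rewrite (l2sq_ext _ _ _ _ (conv_block_diff h)).
  set (R := (2 ^ k)%nat) in *. assert (HR : 1 <= INR R) by (apply (le_INR 1), pow2_ge1).
  set (R' := (R + Z.abs_nat h)%nat).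
  assert (SA : supported R' (psum Kb (S k))) by (eapply supported_psum_CZblock; eauto; simpl; lia).
  assert (SB : supported R' (psum Lb k)) by (eapply supported_psum_CZblock; eauto; simpl; lia).
  assert (FA := Cmod_fourier_psum_le w Kb (S k) DK R' Hw HDK (fun i _ => BK i) ltac:(simpl; lia)).
  assert (FB := Cmod_fourier_psum_le w Lb k DL R' Hw HDL (fun i _ => BL i) ltac:(simpl; lia)).
  assert (E1 := ball_l2_conv_on_le R' _ _ _ SA (supported_diff R _ h SL) FA).
  assert (E2 := ball_l2_conv_on_le R' _ _ _ SB (supported_diff R _ h SK) FB).
  set (M := multiplier_const w) in *.
  set (r := rpow (IZR (Z.abs h) / (2 * INR R)) w).
  assert (Er : rpow (IZR (Z.abs h) / INR R) w = Rpower 2 w * r).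
  { unfold r. rewrite <- rpow_double; [f_equal; field; lra|].
    apply Rdiv_le_0_compat; [apply IZR_le; lia|lra]. }
  specialize (L3 h). specialize (K3 h). rewrite Er in L3, K3.
  assert (Hr : 0 <= Rpower 2 w * r / INR R)
    by (apply Rdiv_le_0_compat; [apply Rmult_le_pos; [left; apply exp_pos|apply rpow_ge0]|lra]).
  eapply Rle_trans; [apply l2sq_plus_le|].
  eapply Rle_trans with (2 * ((M * DK) ^ 2 * (DL ^ 2 * (Rpower 2 w * r / INR R))) +
                         2 * ((M * DL) ^ 2 * (DK ^ 2 * (Rpower 2 w * r / INR R)))).
  { apply Rplus_le_compat; apply Rmult_le_compat_l; try lra;
      (eapply Rle_trans; [eassumption|]); apply Rmult_le_compat_l; try apply pow2_ge_0;
      (eapply Rle_trans; [eassumption|]); right; field; lra. }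
  eapply Rle_trans; [apply conv_const_split, Hr|].
  right. replace ((conv_const w * DK * DL) ^ 2) with (conv_const w ^ 2 * DK ^ 2 * DL ^ 2) by ring.
  rewrite conv_const_sq, mult_INR. replace (INR 2) with 2 by (simpl; ring). fold M r. field. lra.
Qed.

Lemma CZblock_conv_block : CZblock w (conv_block Kb Lb k) (S k) (conv_const w * DK * DL).
Proof.
  apply ball_CZblock.
  - apply conv_block_mean0.
  - apply supported_conv_block.
  - apply ball_l2_conv_block_le.
  - apply ball_l2_diff_conv_block_le.
Qed.

End ConvBlock.

(** * Convergence of the block series *)

Lemma sqrt_le_iff a b : 0 <= b -> (sqrt a <= b <-> a <= b ^ 2).
Proof.
  intros Hb. split; intros H.
  - destruct (Rle_dec a 0); [assert (0 <= b ^ 2) by apply pow2_ge_0; lra|].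
    rewrite <- (pow2_sqrt a) by lra. apply pow_incr. split; auto. apply sqrt_pos.
  - rewrite <- (sqrt_pow2 b) by auto. apply sqrt_le_1_alt. auto.
Qed.

Lemma filterlim_C_Cmod (f : nat -> C) l : filterlim f eventually (locally l) <->
  forall eps, 0 < eps -> exists N, forall n, (N <= n)%nat -> Cmod (Cminus (f n) l) < eps.
Proof.
  split.
  - intros H eps Heps.
    assert (Hnf : 0 < @norm_factor _ C_NormedModule) by apply norm_factor_gt_0.
    assert (He : 0 < eps / @norm_factor _ C_NormedModule) by (apply Rdiv_lt_0_compat; auto).
    destruct (proj1 (filterlim_locally f l) H (mkposreal _ He)) as [N HN].
    exists N. intros n Hn. specialize (HN n Hn).
    apply (@norm_compat2 _ C_NormedModule) in HN. simpl in HN.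
    replace (norm_factor * (eps / norm_factor)) with eps in HN by (field; lra). exact HN.
  - intros H. apply filterlim_locally. intros eps. destruct (H eps (cond_pos eps)) as [N HN].
    exists N. intros n Hn. apply (@norm_compat1 _ C_NormedModule). apply HN. auto.
Qed.

Lemma psum_sum_n F y N : psum F (S N) y = sum_n (fun k => F k y) N.
Proof.
  induction N as [|N IH]; [rewrite sum_O; simpl; ring|].
  rewrite sum_Sn, <- IH. auto.
Qed.

Lemma is_series_psum F l y : is_series (fun k => F k y) l ->
  filterlim (fun N => psum F N y) eventually (locally l).
Proof.
  intros H. apply filterlim_C_Cmod. intros eps Heps.
  destruct (proj1 (filterlim_C_Cmod _ _) H eps Heps) as [N HN].
  exists (S N). intros [|n] Hn; [lia|]. rewrite psum_sum_n. apply HN. lia.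
Qed.

Definition inv_sqrt2 : R := / sqrt 2.

Lemma inv_sqrt2_bounds : 0 < inv_sqrt2 < 1.
Proof.
  unfold inv_sqrt2. assert (1 < sqrt 2) by (rewrite <- sqrt_1; apply sqrt_lt_1_alt; lra).
  split; [apply Rinv_0_lt_compat; lra|]. rewrite <- Rinv_1. apply Rinv_lt_contravar; lra.
Qed.

Definition tail_const : R := 1 / (1 - inv_sqrt2).

Lemma tail_const_pos : 0 < tail_const.
Proof. assert (H := inv_sqrt2_bounds). unfold tail_const. apply Rdiv_lt_0_compat; lra. Qed.

Lemma sqrt_l2sq_CZblock_le w K i D a n : 0 < D -> CZblock w K i D ->
  sqrt (l2sq a n K) <= D * inv_sqrt2 ^ i.
Proof.
  intros HD HB. destruct (CZblock_ball w K i D HB) as [_ [S [Hl2 _]]].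
  assert (Hr := inv_sqrt2_bounds).
  apply sqrt_le_iff; [apply Rmult_le_pos; [lra|apply pow_le; lra]|].
  eapply Rle_trans; [apply (l2sq_le_ball_l2 _ _ _ _ S)|]. eapply Rle_trans; [apply Hl2|]. right.
  rewrite Rpow_mult_distr, <- pow_mult, Nat.mul_comm, pow_mult, pow_INR.
  unfold inv_sqrt2. rewrite pow_inv, pow2_sqrt by lra. rewrite pow_inv.
  replace (INR 2) with 2 by (simpl; ring). field. apply pow_nonzero. lra.
Qed.

(* By (iii), [||F_i||_2 <= D 2^(-i/2)], so the tails are bounded by a geometric series. *)
Lemma sqrt_l2sq_psum_tail_le w F D n N a m : 0 < D -> (forall i, CZblock w (F i) i D) ->
  sqrt (l2sq a m (fun y => Cminus (psum F (n + N) y) (psum F n y))) <=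
  D * inv_sqrt2 ^ n * tail_const.
Proof.
  intros HD HB. assert (Hr := inv_sqrt2_bounds).
  apply Rle_trans with (D * inv_sqrt2 ^ n * (1 - inv_sqrt2 ^ N) / (1 - inv_sqrt2)).
  - induction N as [|N IH].
    + rewrite (l2sq_ext _ _ _ (fun _ => 0%C)) by (intros; rewrite Nat.add_0_r; ring).
      unfold l2sq. rewrite wsumR_eq0, sqrt_0 by (intros; rewrite Cmod_0; ring).
      right. simpl. field. lra.
    + rewrite (l2sq_ext _ _ _
        (fun y => Cplus (Cminus (psum F (n + N) y) (psum F n y)) (F (n + N)%nat y)))
        by (intros; rewrite Nat.add_succ_r; simpl; ring).
      eapply Rle_trans; [apply l2_triangle|].
      eapply Rle_trans;
        [apply Rplus_le_compat; [apply IH | apply (sqrt_l2sq_CZblock_le w _ _ D _ _ HD (HB _))]|].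
      right. rewrite pow_add. simpl. field. lra.
  - unfold tail_const, Rdiv. rewrite Rmult_assoc, Rmult_1_l.
    apply Rmult_le_compat_l; [apply Rmult_le_pos; [lra|apply pow_le; lra]|].
    assert (0 < inv_sqrt2 ^ N) by (apply pow_lt; lra).
    assert (0 < / (1 - inv_sqrt2)) by (apply Rinv_0_lt_compat; lra). nra.
Qed.

Lemma CZrep_l2sq_bounds w j Kb D K : 0 < D -> CZrep w j Kb D K -> forall a m n,
  l2sq a m (fun y => Cminus (K y) (psum Kb n y)) <= (D * inv_sqrt2 ^ n * tail_const) ^ 2 /\
  l2sq a m (psum Kb n) <= (D * tail_const) ^ 2 /\
  l2sq a m K <= (D * tail_const) ^ 2.
Proof.
  intros HD [HB [_ HS]] a m.
  assert (Hr := inv_sqrt2_bounds). assert (HG := tail_const_pos).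
  assert (Hrem : forall n, l2sq a m (fun y => Cminus (K y) (psum Kb n y)) <=
                           (D * inv_sqrt2 ^ n * tail_const) ^ 2).
  { intros n. apply (l2sq_limit a m (fun N y => Cminus (psum Kb (n + N) y) (psum Kb n y))).
    - intros y. apply filterlim_C_Cmod. intros eps Heps.
      destruct (proj1 (filterlim_C_Cmod _ _) (is_series_psum _ _ _ (HS y)) eps Heps) as [N HN].
      exists N. intros N' HN'.
      replace (Cminus (Cminus (psum Kb (n + N') y) (psum Kb n y)) (Cminus (K y) (psum Kb n y)))
        with (Cminus (psum Kb (n + N') y) (K y)) by ring.
      apply HN. lia.
    - intros N.
      apply sqrt_le_iff; [apply Rmult_le_pos; [apply Rmult_le_pos; [lra|apply pow_le; lra]|lra]|].
      apply (sqrt_l2sq_psum_tail_le w); auto. }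
  intros n. repeat split; auto.
  - assert (H := sqrt_l2sq_psum_tail_le w Kb D 0 n a m HD HB). simpl in H.
    rewrite (l2sq_ext _ _ _ (fun y => Cminus (psum Kb n y) 0%C)) by (intros; ring).
    apply sqrt_le_iff; [nra|lra].
  - assert (H := Hrem 0%nat). simpl in H.
    rewrite (l2sq_ext _ _ _ (fun y => Cminus (K y) 0%C)) by (intros; ring).
    replace (D * tail_const) with (D * 1 * tail_const) by ring. auto.
Qed.

Lemma sum_n_conv_blocks w Kb Lb DK DL x :
  (forall i, CZblock w (Kb i) i DK) -> (forall i, CZblock w (Lb i) i DL) ->
  forall n, sum_n (fun m => conv_blocks Kb Lb m x) n = conv_on (2 ^ n) (psum Kb n) (psum Lb n) x.
Proof.
  intros BK BL n. induction n as [|n IH].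
  - rewrite sum_O. symmetry. apply wsumC_eq0. intros. simpl. ring.
  - rewrite sum_Sn, IH. change plus with Cplus. cbn [conv_blocks psum]. unfold conv_block.
    set (R := (2 ^ n)%nat). change (2 ^ S n)%nat with (2 * R)%nat.
    assert (SK := supported_CZblock _ _ _ _ (BK n)).
    assert (SL := supported_CZblock _ _ _ _ (BL n)).
    assert (SKn : supported R (psum Kb n)) by (eapply supported_psum_CZblock; eauto; lia).
    assert (SLn : supported R (psum Lb n)) by (eapply supported_psum_CZblock; eauto; lia).
    change (psum Kb (S n)) with (fun y => Cplus (psum Kb n y) (Kb n y)).
    change (psum Lb (S n)) with (fun y => Cplus (psum Lb n y) (Lb n y)).
    rewrite !conv_on_plusl, !conv_on_plusr, !(conv_on_mono R (2 * R)) by (lia || auto).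
    rewrite (conv_on_comm R (Kb n) (psum Lb n)) by auto.
    match goal with |- ?a = ?b => change (@eq C a b) end. ring.
Qed.

Lemma sum_n_nonneg_wsumC (f : Z -> C) N : sum_n (fun n => f (Z.of_nat n)) N = wsumC 0 (S N) f.
Proof.
  rewrite <- (Nat2Z.id N) at 2. rewrite <- (Z.sub_0_r (Z.of_nat N)), <- zsumC_wsumC.
  unfold zsumC. rewrite Z.sub_0_r, Nat2Z.id. auto.
Qed.
Lemma sum_n_nonneg_wsumR (f : Z -> R) N : sum_n (fun n => f (Z.of_nat n)) N = wsumR 0 (S N) f.
Proof.
  rewrite <- (Nat2Z.id N) at 2. rewrite <- (Z.sub_0_r (Z.of_nat N)), <- zsumR_wsumR.
  unfold zsumR. rewrite Z.sub_0_r, Nat2Z.id. auto.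
Qed.
Lemma sum_n_neg_wsumC (f : Z -> C) N :
  sum_n (fun n => f (- (Z.of_nat n + 1))%Z) N = wsumC (- Z.of_nat (S N)) (S N) f.
Proof.
  rewrite (sum_n_nonneg_wsumC (fun y => f (- (y + 1))%Z)).
  rewrite (wsumC_ext _ _ _ (fun y => (fun u => f (u + -1)%Z) (- y)%Z)) by (intros; f_equal; lia).
  rewrite (wsumC_reflect _ _ (fun u => f (u + -1)%Z)), (wsumC_shift _ _ (-1) f). f_equal. lia.
Qed.
Lemma sum_n_neg_wsumR (f : Z -> R) N :
  sum_n (fun n => f (- (Z.of_nat n + 1))%Z) N = wsumR (- Z.of_nat (S N)) (S N) f.
Proof.
  rewrite (sum_n_nonneg_wsumR (fun y => f (- (y + 1))%Z)).
  rewrite (wsumR_ext _ _ _ (fun y => (fun u => f (u + -1)%Z) (- y)%Z)) by (intros; f_equal; lia).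
  rewrite (wsumR_reflect _ _ (fun u => f (u + -1)%Z)), (wsumR_shift _ _ (-1) f). f_equal. lia.
Qed.

Lemma ex_series_Cmod_bounded (f : nat -> C) M : (forall N, sum_n (fun n => Cmod (f n)) N <= M) ->
  ex_series f.
Proof.
  intros HM. apply (@ex_series_le C_AbsRing C_CompleteNormedModule _ (fun n => Cmod (f n)));
    [intros; apply Rle_refl|].
  destruct (ex_finite_lim_seq_incr (sum_n (fun n => Cmod (f n))) M) as [l Hl]; auto.
  - intros n. rewrite sum_Sn. change plus with Rplus. assert (H0 := Cmod_ge_0 (f (S n))). lra.
  - exists l. exact Hl.
Qed.

Section ConvSeries.

Variables (w DK DL : R) (j : nat) (Kb Lb : nat -> Z -> C) (K L : Z -> C).
Hypotheses (HDK : 0 < DK) (HDL : 0 < DL) (RK : CZrep w j Kb DK K) (RL : CZrep w j Lb DL L).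

Lemma wsumR_Cmod_conv_le x a m :
  wsumR a m (fun y => Cmod (Cmult (K y) (L (x - y)%Z))) <= DK * tail_const * (DL * tail_const).
Proof.
  assert (HG := tail_const_pos).
  destruct (CZrep_l2sq_bounds w j Kb DK K HDK RK a m 0) as [_ [_ HK]].
  destruct (CZrep_l2sq_bounds w j Lb DL L HDL RL (- (a + Z.of_nat m - 1) + x) m 0) as [_ [_ HL]].
  rewrite (wsumR_ext _ _ _ (fun y => Cmod (K y) * Cmod (L (x - y)%Z))) by (intros; apply Cmod_mult).
  eapply Rle_trans; [apply wsumR_Cmod_mult_le|]. rewrite l2sq_reflect.
  apply Rmult_le_compat; try apply sqrt_pos; apply sqrt_le_iff; auto; nra.
Qed.

Lemma is_zsum_conv_ex x : exists l, is_zsum (fun y => Cmult (K y) (L (x - y)%Z)) l.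
Proof.
  set (P := fun y => Cmult (K y) (L (x - y)%Z)).
  destruct (ex_series_Cmod_bounded (fun n => P (Z.of_nat n)) (DK * tail_const * (DL * tail_const)))
    as [l1 H1].
  { intros N. rewrite (sum_n_nonneg_wsumR (fun y => Cmod (P y))). apply wsumR_Cmod_conv_le. }
  destruct (ex_series_Cmod_bounded (fun n => P (- (Z.of_nat n + 1))%Z)
                                   (DK * tail_const * (DL * tail_const))) as [l2 H2].
  { intros N. rewrite (sum_n_neg_wsumR (fun y => Cmod (P y))). apply wsumR_Cmod_conv_le. }
  exists (Cplus l1 l2), l1, l2. auto.
Qed.

(* [K L - K_n L_n = (K - K_n) L + K_n (L - L_n)], each term bounded by Cauchy-Schwarz. *)
Lemma Cmod_wsumC_conv_sub_psum_le x n a m :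
  Cmod (Cminus (wsumC a m (fun y => Cmult (K y) (L (x - y)%Z)))
               (wsumC a m (fun y => Cmult (psum Kb n y) (psum Lb n (x - y)%Z))))
  <= 2 * DK * DL * tail_const ^ 2 * inv_sqrt2 ^ n.
Proof.
  assert (Hr := inv_sqrt2_bounds). assert (HG := tail_const_pos).
  assert (0 <= inv_sqrt2 ^ n) by (apply pow_le; lra).
  rewrite <- wsumC_minus.
  rewrite (wsumC_ext _ _ _ (fun y =>
    Cplus (Cmult (Cminus (K y) (psum Kb n y)) (L (x - y)%Z))
          (Cmult (psum Kb n y) (Cminus (L (x - y)%Z) (psum Lb n (x - y)%Z))))) by (intros; ring).
  rewrite wsumC_plus. eapply Rle_trans; [apply Cmod_triangle|].
  eapply Rle_trans; [apply Rplus_le_compat; apply Cmod_wsumC_mult_le|].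
  set (a' := (- (a + Z.of_nat m - 1) + x)%Z).
  rewrite (l2sq_reflect a m L x), (l2sq_reflect a m (fun z => Cminus (L z) (psum Lb n z)) x). fold a'.
  destruct (CZrep_l2sq_bounds w j Kb DK K HDK RK a m n) as [K1 [K2 _]].
  destruct (CZrep_l2sq_bounds w j Lb DL L HDL RL a' m n) as [L1 [_ L3]].
  apply Rle_trans with (DK * inv_sqrt2 ^ n * tail_const * (DL * tail_const) +
                        DK * tail_const * (DL * inv_sqrt2 ^ n * tail_const)).
  - assert (0 <= DK * inv_sqrt2 ^ n) by nra. assert (0 <= DL * inv_sqrt2 ^ n) by nra.
    apply Rplus_le_compat; apply Rmult_le_compat; try apply sqrt_pos; apply sqrt_le_iff; auto; nra.
  - right. ring.
Qed.

Lemma Cmod_sum_conv_blocks_sub_le x n N : (2 ^ n + Z.abs_nat x <= N)%nat ->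
  Cmod (Cminus (sum_n (fun m => conv_blocks Kb Lb m x) n)
               (Cplus (wsumC (- Z.of_nat (S N)) (S N) (fun y => Cmult (K y) (L (x - y)%Z)))
                      (wsumC 0 (S N) (fun y => Cmult (K y) (L (x - y)%Z)))))
  <= 2 * DK * DL * tail_const ^ 2 * inv_sqrt2 ^ n.
Proof.
  intros HN. destruct RK as [BK _], RL as [BL _].
  set (Pn := fun y => Cmult (psum Kb n y) (psum Lb n (x - y)%Z)).
  assert (SKn : supported (2 ^ n) (psum Kb n)) by (eapply supported_psum_CZblock; eauto; lia).
  replace (sum_n (fun m => conv_blocks Kb Lb m x) n) with (wsumC (- Z.of_nat (S N)) (S N + S N) Pn).
  - assert (H := Cmod_wsumC_conv_sub_psum_le x n (- Z.of_nat (S N)) (S N + S N)). fold Pn in H.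
    rewrite wsumC_split in H. replace (- Z.of_nat (S N) + Z.of_nat (S N))%Z with 0%Z in H by lia.
    rewrite <- Cmod_opp. match goal with |- Cmod (Copp (Cminus ?a ?b)) <= _ =>
      replace (Copp (Cminus a b)) with (Cminus b a) by ring end.
    exact H.
  - rewrite (sum_n_conv_blocks w Kb Lb DK DL x BK BL n).
    apply wsumC_window; try lia. intros y Hy. unfold Pn. rewrite SKn by lia. ring.
Qed.

Lemma is_series_conv_blocks x l : is_zsum (fun y => Cmult (K y) (L (x - y)%Z)) l ->
  is_series (fun m => conv_blocks Kb Lb m x) l.
Proof.
  intros [l1 [l2 [H1 [H2 ->]]]]. set (P := fun y => Cmult (K y) (L (x - y)%Z)).
  assert (Hr := inv_sqrt2_bounds). assert (HG := tail_const_pos).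
  set (Cd := 2 * DK * DL * tail_const ^ 2).
  assert (HCd : 0 < Cd).
  { assert (0 < DK * DL) by (apply Rmult_lt_0_compat; lra).
    assert (0 < tail_const ^ 2) by (apply pow_lt; lra).
    unfold Cd. replace (2 * DK * DL * tail_const ^ 2) with (2 * (DK * DL) * tail_const ^ 2) by ring.
    apply Rmult_lt_0_compat; lra. }
  apply filterlim_C_Cmod. intros eps Heps.
  destruct (proj1 (filterlim_C_Cmod _ _) H1 (eps / 4)) as [N1 HN1]; [lra|].
  destruct (proj1 (filterlim_C_Cmod _ _) H2 (eps / 4)) as [N2 HN2]; [lra|].
  destruct (pow_lt_1_zero inv_sqrt2 ltac:(rewrite Rabs_right; lra) (eps / (2 * Cd))) as [n0 Hn0].
  { apply Rdiv_lt_0_compat; lra. }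
  exists n0. intros n Hn.
  set (N := Nat.max (Nat.max N1 N2) (2 ^ n + Z.abs_nat x)).
  assert (Happrox := Cmod_sum_conv_blocks_sub_le x n N ltac:(unfold N; lia)). fold P Cd in Happrox.
  assert (Hpos := HN1 N ltac:(unfold N; lia)). assert (Hneg := HN2 N ltac:(unfold N; lia)).
  match type of Hpos with context [Cminus ?s _] =>
    replace s with (wsumC 0 (S N) P) in Hpos by (symmetry; apply (sum_n_nonneg_wsumC P)) end.
  match type of Hneg with context [Cminus ?s _] =>
    replace s with (wsumC (- Z.of_nat (S N)) (S N) P) in Hneg
      by (symmetry; apply (sum_n_neg_wsumC P)) end.
  assert (Hsmall : Cd * inv_sqrt2 ^ n < eps / 2).
  { assert (H := Hn0 n Hn). rewrite Rabs_right in H by (apply Rle_ge, pow_le; lra).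
    apply Rmult_lt_compat_l with (r := Cd) in H; auto.
    replace (Cd * (eps / (2 * Cd))) with (eps / 2) in H by (field; lra). lra. }
  set (Sn := wsumC (- Z.of_nat (S N)) (S N) P) in *. set (Sp := wsumC 0 (S N) P) in *.
  match goal with |- Cmod (Cminus ?t _) < _ => set (T := t) end.
  change (Cmod (Cminus T (Cplus Sn Sp)) <= Cd * inv_sqrt2 ^ n) in Happrox.
  replace (Cminus T (Cplus l1 l2)) with
    (Cplus (Cminus T (Cplus Sn Sp)) (Cplus (Cminus Sn l2) (Cminus Sp l1))) by ring.
  assert (H5 := Cmod_triangle (Cminus Sn l2) (Cminus Sp l1)).
  eapply Rle_lt_trans; [apply Cmod_triangle|]. lra.
Qed.

End ConvSeries.

Lemma CZblock_conv_blocks w Kb Lb DK DL : 0 < w -> 0 < DK -> 0 < DL ->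
  (forall i, CZblock w (Kb i) i DK) -> (forall i, CZblock w (Lb i) i DL) ->
  forall m, CZblock w (conv_blocks Kb Lb m) m (conv_const w * DK * DL).
Proof.
  intros Hw HDK HDL BK BL [|k].
  - apply CZblock_zero. assert (H := conv_const_pos w Hw).
    apply Rmult_lt_0_compat; [apply Rmult_lt_0_compat|]; auto.
  - apply CZblock_conv_block; auto.
Qed.

Lemma conv_blocks_below w Kb Lb DK DL j K L : CZrep w j Kb DK K -> CZrep w j Lb DL L ->
  forall m, (m < j)%nat -> forall x, conv_blocks Kb Lb m x = 0%C.
Proof.
  intros [_ [ZK _]] [_ [ZL _]] [|k] Hk x; [auto|]. cbn [conv_blocks]. unfold conv_block.
  rewrite (conv_on_eq0 _ _ (Lb k)), (conv_on_eq0 _ _ (Kb k)) by (intros; apply ZK || apply ZL; lia).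
  ring.
Qed.

Lemma conv_rep w j K L Kb Lb DK DL : 0 < w -> 0 < DK -> 0 < DL ->
  CZrep w j Kb DK K -> CZrep w j Lb DL L ->
  exists M, is_conv K L M /\ CZrep w j (conv_blocks Kb Lb) (conv_const w * DK * DL) M.
Proof.
  intros Hw HDK HDL RK RL.
  destruct (choice _ (is_zsum_conv_ex w DK DL j Kb Lb K L HDK HDL RK RL)) as [M HM].
  exists M. split; [exact HM|]. split; [|split].
  - destruct RK as [BK _], RL as [BL _]. apply CZblock_conv_blocks; auto.
  - apply (conv_blocks_below w Kb Lb DK DL j K L RK RL).
  - intros x. apply (is_series_conv_blocks w DK DL j Kb Lb K L); auto.
Qed.

Lemma is_conv_unique K L M M' : is_conv K L M -> is_conv K L M' -> M = M'.
Proof.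
  intros H H'. apply functional_extensionality. intros x.
  destruct (H x) as [a1 [a2 [A1 [A2 ->]]]], (H' x) as [b1 [b2 [B1 [B2 ->]]]].
  f_equal; [exact (filterlim_locally_unique _ _ _ A1 B1)
          | exact (filterlim_locally_unique _ _ _ A2 B2)].
Qed.

Lemma Glb_Rbar_pos_finite (E : R -> Prop) : (exists x, E x) -> (forall x, E x -> 0 < x) ->
  exists a, Glb_Rbar E = Finite a /\ 0 <= a /\ (forall x, E x -> a <= x) /\
            forall b, (forall x, E x -> b <= x) -> b <= a.
Proof.
  intros [x0 Hx0] Hpos. destruct (Glb_Rbar_correct E) as [lb glb].
  assert (Hup := lb x0 Hx0).
  assert (Hlow : Rbar_le (Finite 0) (Glb_Rbar E)) by (apply glb; intros x Hx; left; apply Hpos; auto).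
  destruct (Glb_Rbar E) as [a| |]; simpl in Hup, Hlow; try contradiction.
  exists a. split; [auto | split; [auto | split]].
  - intros x Hx. exact (lb x Hx).
  - intros b Hb. apply (glb (Finite b)). intros x Hx. apply Hb; auto.
Qed.

(* [glb G <= c x y] for all [x in E], [y in F] passes to the infima one variable at a time. *)
Lemma Glb_Rbar_scaled_product_le (E F G : R -> Prop) c : 0 < c ->
  (exists x, E x) -> (forall x, E x -> 0 < x) ->
  (exists y, F y) -> (forall y, F y -> 0 < y) ->
  (exists z, G z) -> (forall z, G z -> 0 < z) ->
  (forall x y, E x -> F y -> G (c * x * y)) ->
  Rbar_le (Glb_Rbar G) (Rbar_mult (Finite c) (Rbar_mult (Glb_Rbar E) (Glb_Rbar F))).
Proof.
  intros Hc HEne HE HFne HF HGne HG HEFG.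
  destruct (Glb_Rbar_pos_finite E HEne HE) as [a [-> [Ha [_ glbE]]]].
  destruct (Glb_Rbar_pos_finite F HFne HF) as [b [-> [Hb [_ glbF]]]].
  destruct (Glb_Rbar_pos_finite G HGne HG) as [g [-> [_ [lbG _]]]].
  simpl.
  assert (Hx : forall x, E x -> g <= c * b * x).
  { intros x Hx. assert (Hx0 := HE x Hx).
    assert (Hcx : 0 < c * x) by (apply Rmult_lt_0_compat; auto).
    assert (g / (c * x) <= b).
    { apply glbF. intros y Hy. apply Rmult_le_reg_l with (c * x); auto.
      replace (c * x * (g / (c * x))) with g by (field; lra). apply lbG, HEFG; auto. }
    replace g with (c * x * (g / (c * x))) by (field; lra). nra. }
  destruct (Req_dec b 0) as [->|Hb0].
  - destruct HEne as [x Hx0]. specialize (Hx x Hx0). rewrite Rmult_0_r, Rmult_0_l in Hx.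
    rewrite Rmult_0_r, Rmult_0_r. auto.
  - assert (Hcb : 0 < c * b) by (apply Rmult_lt_0_compat; lra).
    assert (g / (c * b) <= a).
    { apply glbE. intros x Hx'. apply Rmult_le_reg_l with (c * b); auto.
      replace (c * b * (g / (c * b))) with g by (field; lra). auto. }
    replace g with (c * b * (g / (c * b))) by (field; lra). nra.
Qed.

Lemma CZrep_weaken w j Kb D K : CZrep w j Kb D K -> CZrep w 0 Kb D K.
Proof. intros [HB [_ HS]]. split; [|split]; auto. intros; lia. Qed.

Theorem lemma2p1 (w : R) (Hw : 0 < w) :
  exists Cst : R, 0 < Cst /\
  forall (j : nat) (K L : Z -> C) (Kb Lb : nat -> Z -> C) (DK DL : R),
    0 < DK -> 0 < DL ->
    CZrep w j Kb DK K -> CZrep w j Lb DL L ->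
    exists M : Z -> C,
      is_conv K L M /\
      (exists Mb : nat -> Z -> C, CZrep w j Mb (Cst * DK * DL) M) /\
      Rbar_le (CZnorm w M)
              (Rbar_mult (Finite Cst) (Rbar_mult (CZnorm w K) (CZnorm w L))).
Proof.
  assert (Hc := conv_const_pos w Hw).
  exists (conv_const w). split; [exact Hc|].
  intros j K L Kb Lb DK DL HDK HDL RK RL.
  destruct (conv_rep w j K L Kb Lb DK DL Hw HDK HDL RK RL) as [M [HM RM]].
  exists M. split; [exact HM | split; [eauto|]].
  assert (Hprod : forall DK' DL', 0 < DK' -> 0 < DL' -> 0 < conv_const w * DK' * DL')
    by (intros; apply Rmult_lt_0_compat; [apply Rmult_lt_0_compat|]; auto).
  assert (Hpos : forall (f : Z -> C) D, (0 < D /\ exists Fb, CZrep w 0 Fb D f) -> 0 < D)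
    by (intros f D [HD _]; exact HD).
  apply Glb_Rbar_scaled_product_le; [exact Hc | | apply Hpos | | apply Hpos | | apply Hpos |].
  - exists DK. split; [exact HDK | exists Kb; eapply CZrep_weaken, RK].
  - exists DL. split; [exact HDL | exists Lb; eapply CZrep_weaken, RL].
  - exists (conv_const w * DK * DL).
    split; [auto | exists (conv_blocks Kb Lb); eapply CZrep_weaken, RM].
  - intros DK' DL' [HDK' [Kb' RK']] [HDL' [Lb' RL']].
    destruct (conv_rep w 0 K L Kb' Lb' DK' DL' Hw HDK' HDL' RK' RL') as [M' [HM' RM']].
    rewrite (is_conv_unique K L M M' HM HM').
    split; [auto | exists (conv_blocks Kb' Lb'); exact RM'].
Qed.
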